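(* Let $b(z)$ be a holomorphic function, $\bar b(\bar z)=\overline{b(z)}$, let $r(y)$ and $k(y)$ be arbitrary smooth real-valued functions of one real variable, and put $y=i(\bar q-q)/2$. Let $G(z,\bar z)$ be a real function with $G_{z\bar z}=\dfrac{b(z)+\bar b(\bar z)}{(z+\bar z)^2}$ and let $K(y,z,\bar z)$ be an antiderivative with respect to $y$ of $\ln\!\left[\dfrac{\bar z+2ik(y)}{z-2ik(y)}\right]$. Then each of the functions $$\psi_1=[q+b(z)]\ln[q+b(z)]+[\bar q+\bar b(\bar z)]\ln[\bar q+\bar b(\bar z)]-(q+\bar q)[\ln(z+\bar z)+1]+G(z,\bar z)+r(y),$$ $$\psi_2=\psi_1+2iy\ln(\bar z/z),\qquad \psi_3=\psi_1+2iK(y,z,\bar z)$$ is a solution of $$\psi_{q\bar q}\psi_{z\bar z}-\psi_{q\bar z}\psi_{\bar q z}=e^{\psi_q+\psi_{\bar q}}\bigl(\psi_{q\bar q}^2-\psi_{qq}\psi_{\bar q\bar q}\bigr).$$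
   Context: All functions are considered on an open set where the logarithms are defined, with branches chosen so that $\ln(\bar q+\bar b)=\overline{\ln(q+b)}$, and with $z+\bar z>0$. Subscripts denote partial (Wirtinger) derivatives with respect to the complex variables $q,\bar q,z,\bar z$; bars denote complex conjugation. *)

From Stdlib Require Import Reals Lra ClassicalEpsilon.
Open Scope R_scope.

Definition Cx : Type := (R * R)%type.
Definition Re (z : Cx) : R := fst z.
Definition Im (z : Cx) : R := snd z.
Definition RtoC (x : R) : Cx := (x, 0).
Definition Ci : Cx := (0, 1).
Definition Cadd (z w : Cx) : Cx := (fst z + fst w, snd z + snd w).
Definition Copp (z : Cx) : Cx := (- fst z, - snd z).
Definition Csub (z w : Cx) : Cx := Cadd z (Copp w).
Definition Cmul (z w : Cx) : Cx :=
  (fst z * fst w - snd z * snd w, fst z * snd w + snd z * fst w).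
Definition Cinv (z : Cx) : Cx :=
  (fst z / (fst z ^ 2 + snd z ^ 2), - snd z / (fst z ^ 2 + snd z ^ 2)).
Definition Cdiv (z w : Cx) : Cx := Cmul z (Cinv w).
Definition Cconj (z : Cx) : Cx := (fst z, - snd z).
Definition Cmod (z : Cx) : R := sqrt (fst z ^ 2 + snd z ^ 2).
Definition Cexp (z : Cx) : Cx := (exp (fst z) * cos (snd z), exp (fst z) * sin (snd z)).

(* principal argument, in (-PI, PI] *)
Definition Carg (z : Cx) : R :=
  let x := fst z in let y := snd z in
  if Rlt_dec 0 x then atan (y / x)
  else if Rlt_dec x 0 then
         (if Rle_dec 0 y then atan (y / x) + PI else atan (y / x) - PI)
  else if Rlt_dec 0 y then PI / 2
  else if Rlt_dec y 0 then - (PI / 2) else 0.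

Definition Cln (z : Cx) : Cx := (ln (Cmod z), Carg z).

Declare Scope C_scope.
Delimit Scope C_scope with C.
Infix "+" := Cadd : C_scope.
Infix "-" := Csub : C_scope.
Infix "*" := Cmul : C_scope.
Infix "/" := Cdiv : C_scope.
Notation "- z" := (Copp z) : C_scope.

Definition HasDer0 (f : R -> Cx) (l : Cx) : Prop :=
  derivable_pt_lim (fun t => fst (f t)) 0 (fst l) /\
  derivable_pt_lim (fun t => snd (f t)) 0 (snd l).

(* the derivative at 0 (meaningful when it exists) *)
Definition Der0 (f : R -> Cx) : Cx :=
  epsilon (inhabits (0, 0)) (fun l => HasDer0 f l).

Definition Dre (g : Cx -> Cx) (z : Cx) : Cx := Der0 (fun t => g (Cadd z (t, 0))).
Definition Dim (g : Cx -> Cx) (z : Cx) : Cx := Der0 (fun t => g (Cadd z (0, t))).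

Definition PartDiff (g : Cx -> Cx) (z : Cx) : Prop :=
  (exists l, HasDer0 (fun t => g (Cadd z (t, 0))) l) /\
  (exists l, HasDer0 (fun t => g (Cadd z (0, t))) l).

Definition Wd (g : Cx -> Cx) (z : Cx) : Cx :=
  Cmul (RtoC (/ 2)) (Csub (Dre g z) (Cmul Ci (Dim g z))).
Definition Wdb (g : Cx -> Cx) (z : Cx) : Cx :=
  Cmul (RtoC (/ 2)) (Cadd (Dre g z) (Cmul Ci (Dim g z))).

Definition dq  (F : Cx -> Cx -> Cx) : Cx -> Cx -> Cx := fun q z => Wd  (fun w => F w z) q.
Definition dqb (F : Cx -> Cx -> Cx) : Cx -> Cx -> Cx := fun q z => Wdb (fun w => F w z) q.
Definition dz  (F : Cx -> Cx -> Cx) : Cx -> Cx -> Cx := fun q z => Wd  (F q) z.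
Definition dzb (F : Cx -> Cx -> Cx) : Cx -> Cx -> Cx := fun q z => Wdb (F q) z.
Definition Diff_q (F : Cx -> Cx -> Cx) (q z : Cx) : Prop := PartDiff (fun w => F w z) q.
Definition Diff_z (F : Cx -> Cx -> Cx) (q z : Cx) : Prop := PartDiff (F q) z.

(* Convention: psi_{ab} = d_b (d_a psi). *)
Definition IsSolution (U : Cx -> Cx -> Prop) (psi : Cx -> Cx -> Cx) : Prop :=
  forall q z, U q z ->
    Diff_q psi q z /\ Diff_z psi q z /\
    Diff_q (dq psi) q z /\ Diff_z (dq psi) q z /\
    Diff_q (dqb psi) q z /\ Diff_z (dqb psi) q z /\
    Diff_z (dz psi) q z /\
    (dqb (dq psi) q z * dzb (dz psi) q z - dzb (dq psi) q z * dz (dqb psi) q z)%C =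
    (Cexp (dq psi q z + dqb psi q z) *
       (dqb (dq psi) q z * dqb (dq psi) q z - dq (dq psi) q z * dqb (dqb psi) q z))%C.

Definition Open2 (U : Cx -> Cx -> Prop) : Prop :=
  forall q z, U q z -> exists eps, 0 < eps /\
    forall q' z', Cmod (Csub q' q) < eps -> Cmod (Csub z' z) < eps -> U q' z'.

Definition ContinuousOn2 (U : Cx -> Cx -> Prop) (F : Cx -> Cx -> Cx) : Prop :=
  forall q z, U q z -> forall eps, 0 < eps -> exists delta, 0 < delta /\
    forall q' z', U q' z' -> Cmod (Csub q' q) < delta -> Cmod (Csub z' z) < delta ->
      Cmod (Csub (F q' z') (F q z)) < eps.

Definition CDeriv (f : Cx -> Cx) (z l : Cx) : Prop :=
  forall eps, 0 < eps -> exists delta, 0 < delta /\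
    forall h, h <> (0, 0) -> Cmod h < delta ->
      Cmod (Csub (Cdiv (Csub (f (Cadd z h)) (f z)) h) l) < eps.

Definition Smooth (f : R -> R) : Prop :=
  exists fs : nat -> R -> R, fs O = f /\
    forall n x, derivable_pt_lim (fs n) x (fs (S n) x).

(* y = i (qbar - q)/2  (a real number; we take its real part, the imaginary part is 0) *)
Definition yof (q : Cx) : R := Re (Cmul Ci (Cmul (Csub (Cconj q) q) (RtoC (/ 2)))).

(** All three have the shape  psi = B(q,z) + rho(y,z),  y = Im q, with the
    common part  B = (q+b) L + conj((q+b) L) - (q+qb)(ln(z+zb)+1) + G  and a
    real rho: rho = r(y) for psi1 and rho = r(y) - 2 Im K(y,z) for psi3, while
    psi2 is the case k = 0, K = y ln(zb/z) of psi3.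
    The heart of the file is [rho_perturbation_solves]: B + rho solves the
    equation as soon as rho(y,.) is harmonic in z and its y-derivative satisfies
    |grad_z rho_y|^2 = (4 / Re z) d_{Im z} rho_y.
    For psi3, Im K is a primitive in y of P0(Re z, Im z - 2 k(y)) with the
    harmonic kernel P0(x,u) = -2 atan(u/x); its z-derivatives are primitives
    of the kernel's derivatives, which gives both conditions on rho. *)

From Stdlib Require Import Reals Lra Psatz ClassicalEpsilon FunctionalExtensionality.
Open Scope R_scope.

(** ** Derivatives of real functions of one real variable *)

(* Library rules restated for lambda-terms, so that [apply] can use them
   syntax-directedly inside the tactic [dpl]. *)
Lemma dpl_eq f x l l' : derivable_pt_lim f x l -> l = l' -> derivable_pt_lim f x l'.
Proof. intros H ->; exact H. Qed.
Lemma dpl_const (c x : R) : derivable_pt_lim (fun _ => c) x 0.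
Proof. apply derivable_pt_lim_const. Qed.
Lemma dpl_id x : derivable_pt_lim (fun t => t) x 1.
Proof. apply derivable_pt_lim_id. Qed.
Lemma dpl_plus f g x a b : derivable_pt_lim f x a -> derivable_pt_lim g x b ->
  derivable_pt_lim (fun t => f t + g t) x (a + b).
Proof. apply derivable_pt_lim_plus. Qed.
Lemma dpl_minus f g x a b : derivable_pt_lim f x a -> derivable_pt_lim g x b ->
  derivable_pt_lim (fun t => f t - g t) x (a - b).
Proof. apply derivable_pt_lim_minus. Qed.
Lemma dpl_opp f x a : derivable_pt_lim f x a ->
  derivable_pt_lim (fun t => - f t) x (- a).
Proof. apply derivable_pt_lim_opp. Qed.
Lemma dpl_mult f g x a b : derivable_pt_lim f x a -> derivable_pt_lim g x b ->
  derivable_pt_lim (fun t => f t * g t) x (a * g x + f x * b).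
Proof. apply derivable_pt_lim_mult. Qed.
Lemma dpl_comp f g x a b : derivable_pt_lim f x a -> derivable_pt_lim g (f x) b ->
  derivable_pt_lim (fun t => g (f t)) x (b * a).
Proof. intros; apply (derivable_pt_lim_comp f g); auto. Qed.
Lemma dpl_div f g x a b : derivable_pt_lim f x a -> derivable_pt_lim g x b -> g x <> 0 ->
  derivable_pt_lim (fun t => f t / g t) x ((a * g x - b * f x) / (g x * g x)).
Proof. intros. apply (derivable_pt_lim_div f g); auto. Qed.
Lemma dpl_inv f x a : derivable_pt_lim f x a -> f x <> 0 ->
  derivable_pt_lim (fun t => / f t) x (- a / (f x * f x)).
Proof.
  intros H Hn. eapply dpl_eq.
  - apply (derivable_pt_lim_ext (fun t => 1 / f t)); [intro; unfold Rdiv; ring|].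
    apply dpl_div; [apply dpl_const | exact H | exact Hn].
  - unfold Rsqr. field. exact Hn.
Qed.
Lemma dpl_pow2 f x a : derivable_pt_lim f x a ->
  derivable_pt_lim (fun t => f t ^ 2) x (2 * f x * a).
Proof.
  intros H. eapply dpl_eq.
  - apply (dpl_comp f (fun u => u ^ 2)); [exact H | apply derivable_pt_lim_pow].
  - simpl. ring.
Qed.
Lemma dpl_atan f x a : derivable_pt_lim f x a ->
  derivable_pt_lim (fun t => atan (f t)) x (/ (1 + f x ^ 2) * a).
Proof. intros H. apply (dpl_comp f atan); [exact H | apply derivable_pt_lim_atan]. Qed.
Lemma dpl_ln f x a : derivable_pt_lim f x a -> 0 < f x ->
  derivable_pt_lim (fun t => ln (f t)) x (/ f x * a).
Proof. intros H P. apply (dpl_comp f ln); [exact H | apply derivable_pt_lim_ln; exact P]. Qed.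
Lemma dpl_shift0 (h : R -> R) y a : derivable_pt_lim h y a ->
  derivable_pt_lim (fun t => h (y + t)) 0 a.
Proof.
  intros H. eapply dpl_eq.
  - apply (dpl_comp (fun t => y + t) h); [apply dpl_plus; [apply dpl_const | apply dpl_id]|].
    rewrite Rplus_0_r. exact H.
  - ring.
Qed.

Ltac dpl := repeat first
  [ apply dpl_const | apply dpl_id | apply dpl_plus | apply dpl_minus | apply dpl_opp
  | apply dpl_mult | apply dpl_pow2 | apply dpl_atan | apply dpl_div | apply dpl_inv ].

Lemma HasDer0_unique f l1 l2 : HasDer0 f l1 -> HasDer0 f l2 -> l1 = l2.
Proof.
  intros [A B] [C D]. destruct l1, l2; simpl in *.
  f_equal; eapply uniqueness_limite; eauto.
Qed.

Lemma Der0_eq f l : HasDer0 f l -> Der0 f = l.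
Proof.
  intros H. unfold Der0. apply HasDer0_unique with f; [|exact H].
  apply epsilon_spec. exists l; exact H.
Qed.

Lemma HD_eq f l l' : HasDer0 f l -> l = l' -> HasDer0 f l'.
Proof. intros H ->; exact H. Qed.
Lemma HD_const (c : Cx) : HasDer0 (fun _ => c) (0,0).
Proof. split; apply dpl_const. Qed.
Lemma HD_add f g a b : HasDer0 f a -> HasDer0 g b ->
  HasDer0 (fun t => Cadd (f t) (g t)) (Cadd a b).
Proof. intros [A1 A2] [B1 B2]; split; simpl; apply dpl_plus; auto. Qed.
Lemma HD_opp f a : HasDer0 f a -> HasDer0 (fun t => Copp (f t)) (Copp a).
Proof. intros [A1 A2]; split; simpl; apply dpl_opp; auto. Qed.
Lemma HD_sub f g a b : HasDer0 f a -> HasDer0 g b ->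
  HasDer0 (fun t => Csub (f t) (g t)) (Csub a b).
Proof. intros; unfold Csub; apply HD_add; auto; apply HD_opp; auto. Qed.
Lemma HD_mul f g a b : HasDer0 f a -> HasDer0 g b ->
  HasDer0 (fun t => Cmul (f t) (g t)) (Cadd (Cmul a (g 0)) (Cmul (f 0) b)).
Proof.
  intros [A1 A2] [B1 B2]; split; simpl.
  - eapply dpl_eq; [apply dpl_minus; apply dpl_mult; eauto|]. cbv beta; ring.
  - eapply dpl_eq; [apply dpl_plus; apply dpl_mult; eauto|]. cbv beta; ring.
Qed.
Lemma HD_conj f a : HasDer0 f a -> HasDer0 (fun t => Cconj (f t)) (Cconj a).
Proof. intros [A1 A2]; split; simpl; auto. apply dpl_opp; auto. Qed.
Lemma HD_RtoC h a : derivable_pt_lim h 0 a -> HasDer0 (fun t => RtoC (h t)) (RtoC a).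
Proof. intros H; split; simpl; auto. apply dpl_const. Qed.
Lemma HD_lineR z : HasDer0 (fun t => Cadd z (t, 0)) (1, 0).
Proof. split; simpl; (eapply dpl_eq; [dpl | ring]). Qed.
Lemma HD_lineI z : HasDer0 (fun t => Cadd z (0, t)) (0, 1).
Proof. split; simpl; (eapply dpl_eq; [dpl | ring]). Qed.
Lemma HD_pairR : HasDer0 (fun t => (t, 0)) (1, 0).
Proof. split; simpl; [apply dpl_id | apply dpl_const]. Qed.
Lemma HD_pairI : HasDer0 (fun t => (0, t)) (0, 1).
Proof. split; simpl; [apply dpl_const | apply dpl_id]. Qed.

Lemma HD_loc f g l d : 0 < d -> (forall t, Rabs t < d -> f t = g t) ->
  HasDer0 f l -> HasDer0 g l.
Proof.
  intros Hd E [A B]; split.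
  - apply (derivable_pt_lim_locally_ext (fun t => fst (f t)) _ 0 (-d) d); [lra| |exact A].
    intros t Ht; rewrite E; auto; apply Rabs_def1; lra.
  - apply (derivable_pt_lim_locally_ext (fun t => snd (f t)) _ 0 (-d) d); [lra| |exact B].
    intros t Ht; rewrite E; auto; apply Rabs_def1; lra.
Qed.

Ltac HD := repeat first
  [ apply HD_const | apply HD_lineR | apply HD_lineI | apply HD_pairR | apply HD_pairI
  | apply HD_add | apply HD_sub | apply HD_opp | apply HD_mul | apply HD_conj ].

Lemma Wd_of g z a c :
  HasDer0 (fun t => g (Cadd z (t, 0))) a -> HasDer0 (fun t => g (Cadd z (0, t))) c ->
  PartDiff g z /\
  Wd g z = Cmul (RtoC (/2)) (Csub a (Cmul Ci c)) /\
  Wdb g z = Cmul (RtoC (/2)) (Cadd a (Cmul Ci c)).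
Proof.
  intros Ha Hc. unfold Wd, Wdb, Dre, Dim.
  rewrite (Der0_eq _ _ Ha), (Der0_eq _ _ Hc).
  split; [split; eauto | auto].
Qed.

Lemma PartDiff_lines g z : PartDiff g z ->
  HasDer0 (fun t => g (Cadd z (t, 0))) (Dre g z) /\
  HasDer0 (fun t => g (Cadd z (0, t))) (Dim g z).
Proof.
  intros [[a Ha] [c Hc]]. unfold Dre, Dim.
  rewrite (Der0_eq _ _ Ha), (Der0_eq _ _ Hc). auto.
Qed.

Lemma Cmod_fst w : Rabs (fst w) <= Cmod w.
Proof. unfold Cmod. rewrite <- sqrt_Rsqr_abs. apply sqrt_le_1_alt. unfold Rsqr. simpl. nra. Qed.
Lemma Cmod_snd w : Rabs (snd w) <= Cmod w.
Proof. unfold Cmod. rewrite <- sqrt_Rsqr_abs. apply sqrt_le_1_alt. unfold Rsqr. simpl. nra. Qed.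
Lemma Cmod_real h : Cmod (h, 0) = Rabs h.
Proof. unfold Cmod; simpl. rewrite <- sqrt_Rsqr_abs. f_equal. unfold Rsqr; ring. Qed.
Lemma Cmod_imag h : Cmod (0, h) = Rabs h.
Proof. unfold Cmod; simpl. rewrite <- sqrt_Rsqr_abs. f_equal. unfold Rsqr; ring. Qed.
Lemma Cadd_00 z : Cadd z (0, 0) = z.
Proof. destruct z; unfold Cadd; simpl; f_equal; ring. Qed.
Lemma Cadd_0l w : Cadd (0,0) w = w.
Proof. destruct w; unfold Cadd; simpl; f_equal; ring. Qed.

Lemma lineR_le z t : Cmod (Csub (Cadd z (t,0)) z) <= Rabs t.
Proof.
  right. rewrite <- Cmod_real. f_equal. unfold Csub, Cadd, Copp; simpl; f_equal; ring.
Qed.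
Lemma lineI_le z t : Cmod (Csub (Cadd z (0,t)) z) <= Rabs t.
Proof.
  right. rewrite <- Cmod_imag. f_equal. unfold Csub, Cadd, Copp; simpl; f_equal; ring.
Qed.
Lemma const_le z t : Cmod (Csub z z) <= Rabs t.
Proof.
  replace (Csub z z) with (0, 0) by (unfold Csub, Cadd, Copp; simpl; f_equal; ring).
  rewrite Cmod_real, Rabs_R0. apply Rabs_pos.
Qed.

Lemma Cnorm2_neq0 w : w <> (0,0) -> fst w ^ 2 + snd w ^ 2 <> 0.
Proof.
  intros Hw E. apply Hw. destruct w as [a c]; simpl in *.
  pose proof (pow2_ge_0 a). pose proof (pow2_ge_0 c).
  f_equal; apply Rsqr_eq_0; unfold Rsqr; simpl in *; lra.
Qed.
Lemma Cexp_sqnorm w : fst (Cexp w) ^ 2 + snd (Cexp w) ^ 2 = exp (fst w) * exp (fst w).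
Proof.
  unfold Cexp; simpl. pose proof (sin2_cos2 (snd w)) as S. unfold Rsqr in S.
  transitivity (exp (fst w) * exp (fst w) *
    (sin (snd w) * sin (snd w) + cos (snd w) * cos (snd w))); [ring|].
  rewrite S; ring.
Qed.

Lemma CD_lineR f z l : CDeriv f z l -> HasDer0 (fun t => f (Cadd z (t, 0))) l.
Proof.
  intros H. split; intros eps Heps; destruct (H eps Heps) as [d [Hd Hf]];
  exists (mkposreal d Hd); intros h Hh Hhd; simpl in *;
  (assert (Hn : (h,0) <> (0,0)) by (intro E; injection E; lra));
  (assert (Hm: Cmod (h,0) < d) by (rewrite Cmod_real; exact Hhd));
  specialize (Hf _ Hn Hm); rewrite Rplus_0_l, Cadd_00;
  refine (Rle_lt_trans _ _ _ _ Hf).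
  - match goal with |- Rabs ?a <= _ =>
      replace a with (fst (Csub (Cdiv (Csub (f (Cadd z (h, 0))) (f z)) (h, 0)) l)) end.
    + apply Cmod_fst.
    + unfold Csub, Cdiv, Cmul, Cinv, Cadd, Copp; simpl. field. exact Hh.
  - match goal with |- Rabs ?a <= _ =>
      replace a with (snd (Csub (Cdiv (Csub (f (Cadd z (h, 0))) (f z)) (h, 0)) l)) end.
    + apply Cmod_snd.
    + unfold Csub, Cdiv, Cmul, Cinv, Cadd, Copp; simpl. field. exact Hh.
Qed.

Lemma CD_lineI f z l : CDeriv f z l -> HasDer0 (fun t => f (Cadd z (0, t))) (Cmul Ci l).
Proof.
  intros H. split; intros eps Heps; destruct (H eps Heps) as [d [Hd Hf]];
  exists (mkposreal d Hd); intros h Hh Hhd; simpl in *;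
  (assert (Hn : (0,h) <> (0,0)) by (intro E; injection E; lra));
  (assert (Hm: Cmod (0,h) < d) by (rewrite Cmod_imag; exact Hhd));
  specialize (Hf _ Hn Hm); rewrite Rplus_0_l, Cadd_00;
  refine (Rle_lt_trans _ _ _ _ Hf).
  - match goal with |- Rabs ?a <= _ =>
      replace a with (- snd (Csub (Cdiv (Csub (f (Cadd z (0, h))) (f z)) (0, h)) l)) end.
    + rewrite Rabs_Ropp. apply Cmod_snd.
    + unfold Csub, Cdiv, Cmul, Cinv, Cadd, Copp; simpl. field. exact Hh.
  - match goal with |- Rabs ?a <= _ =>
      replace a with (fst (Csub (Cdiv (Csub (f (Cadd z (0, h))) (f z)) (0, h)) l)) end.
    + apply Cmod_fst.
    + unfold Csub, Cdiv, Cmul, Cinv, Cadd, Copp; simpl. field. exact Hh.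
Qed.

(** ** Derivative of a continuous branch of the logarithm *)

Section ContinuousLog.
Variables (Lam Gam : R -> Cx) (g : Cx) (d : R).
Hypothesis Hd : 0 < d.
Hypothesis HE : forall t, Rabs t < d -> Cexp (Lam t) = Gam t.
Hypothesis Hc : forall eps, 0 < eps -> exists del, 0 < del /\
  forall t, Rabs t < del -> Cmod (Csub (Lam t) (Lam 0)) < eps.
Hypothesis HG : HasDer0 Gam g.
Hypothesis Hn0 : Gam 0 <> (0,0).

Let N2 := fst (Gam 0) ^ 2 + snd (Gam 0) ^ 2.

Lemma N2_pos : 0 < N2.
Proof.
  pose proof (Cnorm2_neq0 _ Hn0). pose proof (pow2_ge_0 (fst (Gam 0))).
  pose proof (pow2_ge_0 (snd (Gam 0))). unfold N2. lra.
Qed.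

Lemma Gam_polar t : Rabs t < d ->
  fst (Gam t) = exp (fst (Lam t)) * cos (snd (Lam t)) /\
  snd (Gam t) = exp (fst (Lam t)) * sin (snd (Lam t)).
Proof. intros Ht. rewrite <- HE by auto. split; reflexivity. Qed.

(* Re Lam = (1/2) ln |Gam|^2 near 0. *)
Lemma continuous_log_re : derivable_pt_lim (fun t => fst (Lam t)) 0 (fst (Cdiv g (Gam 0))).
Proof.
  destruct HG as [G1 G2]. pose proof N2_pos as HN.
  apply (derivable_pt_lim_locally_ext
    (fun t => / 2 * ln (fst (Gam t) ^ 2 + snd (Gam t) ^ 2)) _ 0 (-d) d); [lra| |].
  - intros t Ht. rewrite <- HE, Cexp_sqnorm by (apply Rabs_def1; lra).
    rewrite <- exp_plus, ln_exp. field.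
  - eapply dpl_eq.
    + apply dpl_mult; [apply dpl_const|]. apply dpl_ln; [|exact HN].
      apply dpl_plus; apply dpl_pow2; eassumption.
    + fold N2. unfold Cdiv, Cmul, Cinv; simpl. field. unfold N2 in HN; simpl in HN. lra.
Qed.

(* Im Lam = Im Lam(0) + atan (Im (Gam t conj(Gam 0)) / Re (Gam t conj(Gam 0)))
   near 0, because by continuity Im Lam moves by less than pi/2. *)
Lemma continuous_log_im : derivable_pt_lim (fun t => snd (Lam t)) 0 (snd (Cdiv g (Gam 0))).
Proof.
  destruct HG as [G1 G2]. pose proof N2_pos as HN.
  destruct (Hc (PI/2)) as [del [Hdel Hc']]. { pose proof PI_RGT_0; lra. }
  set (del' := Rmin d del).
  assert (Hdel' : 0 < del') by (apply Rmin_pos; auto).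
  set (N := fun t => snd (Gam t) * fst (Gam 0) - fst (Gam t) * snd (Gam 0)).
  set (M := fun t => fst (Gam t) * fst (Gam 0) + snd (Gam t) * snd (Gam 0)).
  apply (derivable_pt_lim_locally_ext
    (fun t => snd (Lam 0) + atan (N t / M t)) _ 0 (-del') del'); [lra| |].
  - intros t Ht.
    assert (Ht1 : Rabs t < d) by
      (apply Rabs_def1; unfold del' in *; pose proof (Rmin_l d del); lra).
    assert (Ht2 : Rabs t < del) by
      (apply Rabs_def1; unfold del' in *; pose proof (Rmin_r d del); lra).
    assert (Ht0 : Rabs 0 < d) by (rewrite Rabs_R0; exact Hd).
    set (al := snd (Lam t) - snd (Lam 0)).
    assert (A : Rabs al < PI/2).
    { eapply Rle_lt_trans; [|apply (Hc' t Ht2)].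
      replace al with (snd (Csub (Lam t) (Lam 0))) by (unfold al, Csub, Cadd, Copp; simpl; ring).
      apply Cmod_snd. }
    destruct (Rabs_def2 _ _ A) as [A1 A2].
    destruct (Gam_polar t Ht1) as [P1 P2]. destruct (Gam_polar 0 Ht0) as [Q1 Q2].
    assert (EN : N t = exp (fst (Lam t)) * exp (fst (Lam 0)) * sin al).
    { unfold N, al. rewrite sin_minus, P1, P2, Q1, Q2. ring. }
    assert (EM : M t = exp (fst (Lam t)) * exp (fst (Lam 0)) * cos al).
    { unfold M, al. rewrite cos_minus, P1, P2, Q1, Q2. ring. }
    pose proof (cos_gt_0 al A2 A1).
    pose proof (exp_pos (fst (Lam t))); pose proof (exp_pos (fst (Lam 0))).
    rewrite EN, EM.
    replace (exp (fst (Lam t)) * exp (fst (Lam 0)) * sin al /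
             (exp (fst (Lam t)) * exp (fst (Lam 0)) * cos al)) with (tan al)
      by (unfold tan; field; repeat split; apply Rgt_not_eq; assumption).
    rewrite atan_tan by lra. unfold al; ring.
  - assert (N0 : N 0 = 0) by (unfold N; ring).
    assert (M0 : M 0 = N2) by (unfold M, N2; ring).
    eapply dpl_eq.
    + apply dpl_plus; [apply dpl_const|]. apply dpl_atan.
      apply dpl_div; [unfold N; dpl; eassumption | unfold M; dpl; eassumption | ].
      rewrite M0; lra.
    + cbv beta. fold (N 0) (M 0). rewrite N0, M0.
      unfold N2 in *; unfold Cdiv, Cmul, Cinv; simpl. field. simpl in HN; lra.
Qed.

Lemma continuous_log_der : HasDer0 Lam (Cdiv g (Gam 0)).
Proof. split; [apply continuous_log_re | apply continuous_log_im]. Qed.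

End ContinuousLog.

(** ** The principal argument and logarithm *)

Section Quadrants.
Variable th : R.
Hypothesis Hth : - PI < th < PI.

Lemma angle_cos_pos : 0 < cos th -> - (PI/2) < th < PI/2.
Proof.
  intros Hc. pose proof PI_RGT_0. split.
  - destruct (Rlt_le_dec (-(PI/2)) th) as [h|h]; auto.
    rewrite <- cos_neg in Hc. pose proof (cos_le_0 (-th) ltac:(lra) ltac:(lra)). lra.
  - destruct (Rlt_le_dec th (PI/2)) as [h|h]; auto.
    pose proof (cos_le_0 th ltac:(lra) ltac:(lra)). lra.
Qed.
Lemma angle_cos_neg : cos th < 0 -> th < - (PI/2) \/ PI/2 < th.
Proof.
  intros Hc. pose proof PI_RGT_0.
  destruct (Rlt_le_dec th (-(PI/2))) as [h|h]; auto.
  destruct (Rlt_le_dec (PI/2) th) as [h'|h']; auto.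
  pose proof (cos_ge_0 th h h'). lra.
Qed.
Lemma angle_sin_nonneg : 0 <= sin th -> 0 <= th.
Proof.
  intros Hs. destruct (Rle_lt_dec 0 th) as [h|h]; auto.
  pose proof (sin_gt_0 (-th) ltac:(lra) ltac:(lra)) as S. rewrite sin_neg in S. lra.
Qed.
Lemma angle_sin_neg : sin th < 0 -> th < 0.
Proof.
  intros Hs. destruct (Rle_lt_dec 0 th) as [h|h]; auto.
  pose proof (sin_ge_0 th h ltac:(lra)). lra.
Qed.
Lemma angle_cos0_pos : cos th = 0 -> 0 < sin th -> th = PI/2.
Proof.
  intros Hc Hs. pose proof PI_RGT_0.
  assert (0 <= th) by (apply angle_sin_nonneg; lra).
  destruct (Rtotal_order th (PI/2)) as [h|[h|h]]; auto.
  - pose proof (cos_gt_0 th ltac:(lra) h). lra.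
  - pose proof (cos_lt_0 th h ltac:(lra)). lra.
Qed.
Lemma angle_cos0_neg : cos th = 0 -> sin th < 0 -> th = -(PI/2).
Proof.
  intros Hc Hs. pose proof PI_RGT_0.
  assert (th < 0) by (apply angle_sin_neg; lra).
  destruct (Rtotal_order th (-(PI/2))) as [h|[h|h]]; auto.
  - rewrite <- cos_neg in Hc. pose proof (cos_lt_0 (-th) ltac:(lra) ltac:(lra)). lra.
  - pose proof (cos_gt_0 th h ltac:(lra)). lra.
Qed.
End Quadrants.

Lemma tan_shift a : cos a <> 0 -> tan (a - PI) = tan a /\ tan (a + PI) = tan a.
Proof.
  intros Hc. unfold tan. rewrite sin_minus, cos_minus, sin_plus, cos_plus, sin_PI, cos_PI.
  split; field; lra.
Qed.

Lemma Carg_polar m th : 0 < m -> - PI < th < PI ->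
  Carg (m * cos th, m * sin th) = th.
Proof.
  intros Hm Hth. pose proof PI_RGT_0.
  unfold Carg; simpl.
  destruct (Rlt_dec 0 (m * cos th)) as [h1|h1].
  - assert (Hc : 0 < cos th) by nra.
    replace (m * sin th / (m * cos th)) with (tan th) by (unfold tan; field; lra).
    apply atan_tan. apply angle_cos_pos; auto.
  - destruct (Rlt_dec (m * cos th) 0) as [h2|h2].
    + assert (Hc : cos th < 0) by nra.
      destruct (tan_shift th ltac:(lra)) as [T1 T2].
      replace (m * sin th / (m * cos th)) with (tan th) by (unfold tan; field; lra).
      destruct (Rle_dec 0 (m * sin th)) as [h3|h3].
      * assert (Hs : 0 <= sin th) by nra.
        pose proof (angle_sin_nonneg th Hth Hs).
        destruct (angle_cos_neg th Hc) as [h|h]; [lra|].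
        rewrite <- T1, atan_tan; lra.
      * assert (Hs : sin th < 0) by nra.
        pose proof (angle_sin_neg th Hth Hs).
        destruct (angle_cos_neg th Hc) as [h|h]; [|lra].
        rewrite <- T2, atan_tan; lra.
    + assert (Hc : cos th = 0) by nra.
      destruct (Rlt_dec 0 (m * sin th)) as [h3|h3].
      * symmetry; apply angle_cos0_pos; auto; nra.
      * destruct (Rlt_dec (m * sin th) 0) as [h4|h4].
        -- symmetry; apply angle_cos0_neg; auto; nra.
        -- exfalso. assert (Hs : sin th = 0) by nra.
           pose proof (sin2_cos2 th) as S. unfold Rsqr in S. rewrite Hs, Hc in S. lra.
Qed.

Lemma conj_ratio_polar x u : 0 < x ->
  Cdiv (x, - u) (x, u) = (1 * cos (-2 * atan (u / x)), 1 * sin (-2 * atan (u / x))).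
Proof.
  intros Hx. set (a := atan (u / x)).
  replace (-2 * a) with (- (2 * a)) by ring. rewrite cos_neg, sin_neg, cos_2a, sin_2a.
  unfold a. rewrite cos_atan, sin_atan.
  assert (HS : 0 < 1 + (u/x)²) by (unfold Rsqr; nra).
  pose proof (sqrt_lt_R0 _ HS) as Sp.
  pose proof (sqrt_sqrt _ (Rlt_le _ _ HS)) as SS.
  set (S := sqrt (1 + (u / x)²)) in *.
  unfold Cdiv, Cmul, Cinv; simpl.
  assert (D : x * x + u * u <> 0) by nra.
  f_equal.
  - transitivity ((1 - (u/x)*(u/x)) / (S * S)); [|field; lra].
    rewrite SS. unfold Rsqr. field. split; lra.
  - transitivity (- (2 * (u/x)) / (S * S)); [|field; lra].
    rewrite SS. unfold Rsqr. field. split; lra.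
Qed.

Lemma Cln_conj_ratio x u : 0 < x -> Cln (Cdiv (x, - u) (x, u)) = (0, -2 * atan (u / x)).
Proof.
  intros Hx. rewrite conj_ratio_polar by auto. unfold Cln. f_equal.
  - unfold Cmod; simpl.
    pose proof (sin2_cos2 (-2 * atan (u / x))) as S. unfold Rsqr in S.
    match goal with |- ln (sqrt ?a) = 0 => replace a with 1 by lra end.
    rewrite sqrt_1. apply ln_1.
  - apply Carg_polar; [lra|]. pose proof (atan_bound (u/x)). lra.
Qed.

Lemma Cln_twice_re z : 0 < fst z -> Cln (Cadd z (Cconj z)) = RtoC (ln (fst z + fst z)).
Proof.
  intros Hx. unfold Cln, RtoC, Cmod, Carg, Cadd, Cconj; simpl. f_equal.
  - f_equal. replace ((fst z + fst z) * ((fst z + fst z) * 1) + (snd z + - snd z) * ((snd z + - snd z) * 1))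
      with (Rsqr (fst z + fst z)) by (unfold Rsqr; ring).
    rewrite sqrt_Rsqr_abs. apply Rabs_right. lra.
  - destruct (Rlt_dec 0 (fst z + fst z)); [|lra].
    replace ((snd z + - snd z) / (fst z + fst z)) with 0 by (field; lra). apply atan_0.
Qed.

Lemma yof_eq q : yof q = snd q.
Proof. unfold yof, Re, Cmul, Csub, Cadd, Copp, Cconj, Ci, RtoC; simpl. field. Qed.

(** ** Differentiating a primitive with respect to a parameter *)

Lemma primitive_exists (g : R -> R) a b c : a <= c <= b ->
  (forall t, a <= t <= b -> continuity_pt g t) ->
  exists H, H c = 0 /\ forall t, a <= t <= b -> derivable_pt_lim H t (g t).
Proof.
  intros Hc Hg. assert (h : a <= b) by lra.
  set (P := primitive h (FTC_P1 h Hg)).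
  exists (fun t => P t - P c). split; [ring|].
  intros t Ht. eapply dpl_eq.
  - apply dpl_minus; [apply RiemannInt_P28; exact Ht | apply dpl_const].
  - ring.
Qed.

Definition PrimF (y0 : R) (g : R -> R) (Y : R) : R -> R :=
  epsilon (inhabits (fun _ => 0)) (fun H => H y0 = 0 /\
    forall t, Rmin y0 Y <= t <= Rmax y0 Y -> derivable_pt_lim H t (g t)).

Lemma PrimF_spec y0 g Y :
  (forall t, Rmin y0 Y <= t <= Rmax y0 Y -> continuity_pt g t) ->
  PrimF y0 g Y y0 = 0 /\
  forall t, Rmin y0 Y <= t <= Rmax y0 Y -> derivable_pt_lim (PrimF y0 g Y) t (g t).
Proof.
  intros Hg. unfold PrimF. apply epsilon_spec.
  apply primitive_exists; auto. split; [apply Rmin_l | apply Rmax_l].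
Qed.

Lemma zero_derivative_const (F : R -> R) y0 Y :
  (forall t, Rmin y0 Y <= t <= Rmax y0 Y -> derivable_pt_lim F t 0) -> F Y = F y0.
Proof.
  intros HF. destruct (MVT_abs F (fun _ => 0) y0 Y HF) as [c [Ec _]].
  rewrite Rabs_R0, Rmult_0_l in Ec.
  destruct (Req_dec (F Y - F y0) 0) as [E|E]; [lra|].
  exfalso; apply (Rabs_no_R0 _ E); exact Ec.
Qed.

Lemma between_abs s0 s c : Rmin s0 s <= c <= Rmax s0 s -> Rabs (c - s0) <= Rabs (s - s0).
Proof. unfold Rmin, Rmax, Rabs; intros; repeat destruct (Rcase_abs _); repeat destruct (Rle_dec _ _); lra. Qed.

Lemma sq_abs a : Rabs a * Rabs a = a * a.
Proof. rewrite <- Rabs_mult. apply Rabs_right. apply Rle_ge. apply Rle_0_sqr. Qed.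

Lemma taylor2_bound (g g1 g2 : R -> R) s0 d C : 0 < d ->
  (forall s, Rabs (s - s0) < d -> derivable_pt_lim g s (g1 s)) ->
  (forall s, Rabs (s - s0) < d -> derivable_pt_lim g1 s (g2 s)) ->
  (forall s, Rabs (s - s0) < d -> Rabs (g2 s) <= C) ->
  forall s, Rabs (s - s0) < d ->
    Rabs (g s - g s0 - (s - s0) * g1 s0) <= C * ((s - s0) * (s - s0)).
Proof.
  intros Hd H1 H2 HC s Hs.
  assert (Hin : forall c, Rmin s0 s <= c <= Rmax s0 s -> Rabs (c - s0) < d).
  { intros c Hc. apply Rle_lt_trans with (Rabs (s - s0)); [apply between_abs | ]; assumption. }
  destruct (MVT_abs (fun σ => g σ - g s0 - (σ - s0) * g1 s0) (fun σ => g1 σ - g1 s0) s0 s)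
    as [c [Ec Hc]].
  { intros c Hc. eapply dpl_eq.
    - apply dpl_minus; [apply dpl_minus; [apply H1; auto | apply dpl_const]|].
      apply dpl_mult; [apply dpl_minus; [apply dpl_id | apply dpl_const] | apply dpl_const].
    - cbv beta. ring. }
  cbv beta in Ec. replace (g s0 - g s0 - (s0 - s0) * g1 s0) with 0 in Ec by ring.
  rewrite Rminus_0_r in Ec. rewrite Ec.
  destruct (MVT_abs g1 g2 s0 c) as [c2 [Ec2 Hc2]].
  { intros c' Hc'. apply H2. apply Rle_lt_trans with (Rabs (c - s0)); auto.
    apply between_abs; auto. }
  rewrite Ec2.
  assert (HC2 : Rabs (g2 c2) <= C).
  { apply HC. apply Rle_lt_trans with (Rabs (c - s0)); auto. apply between_abs; auto. }
  pose proof (between_abs _ _ _ Hc). pose proof (Rabs_pos (c - s0)).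
  pose proof (Rabs_pos (g2 c2)). pose proof (Rabs_pos (s - s0)).
  rewrite <- (sq_abs (s - s0)).
  apply Rle_trans with (C * Rabs (c - s0) * Rabs (s - s0)).
  - apply Rmult_le_compat_r; auto. apply Rmult_le_compat_r; auto.
  - rewrite <- Rmult_assoc. apply Rmult_le_compat_r; auto. apply Rmult_le_compat_l; lra.
Qed.

Lemma derive_param_primitive (F f : R -> R -> R) (Hh g : R -> R) (y0 Y s0 d C : R) :
  0 < d -> 0 <= C ->
  (forall s, Rabs (s - s0) < d -> forall t, Rmin y0 Y <= t <= Rmax y0 Y ->
      derivable_pt_lim (fun t => F t s) t (f t s)) ->
  (forall s, Rabs (s - s0) < d -> F y0 s = 0) ->
  (forall t, Rmin y0 Y <= t <= Rmax y0 Y -> derivable_pt_lim Hh t (g t)) -> Hh y0 = 0 ->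
  (forall s t, Rabs (s - s0) < d -> Rmin y0 Y <= t <= Rmax y0 Y ->
      Rabs (f t s - f t s0 - (s - s0) * g t) <= C * ((s - s0) * (s - s0))) ->
  derivable_pt_lim (fun s => F Y s) s0 (Hh Y).
Proof.
  intros Hd HC HF HF0 HH HH0 Hb eps Heps.
  set (A := C * Rabs (Y - y0) + 1).
  assert (HA : 0 < A) by (unfold A; pose proof (Rabs_pos (Y - y0)); nra).
  assert (Hdel : 0 < Rmin d (eps / A)) by (apply Rmin_pos; auto; apply Rdiv_lt_0_compat; auto).
  exists (mkposreal _ Hdel). intros h Hh0 Hhd. simpl in Hhd.
  assert (Hh1 : Rabs h < d) by (eapply Rlt_le_trans; [exact Hhd | apply Rmin_l]).
  assert (Hh2 : Rabs h < eps / A) by (eapply Rlt_le_trans; [exact Hhd | apply Rmin_r]).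
  assert (Hs : Rabs (s0 + h - s0) < d) by (replace (s0 + h - s0) with h by ring; auto).
  assert (Hs0 : Rabs (s0 - s0) < d) by (rewrite Rminus_diag, Rabs_R0; auto).
  (* mean value theorem in t for the remainder F(t, s0+h) - F(t, s0) - h Hh(t) *)
  destruct (MVT_abs (fun t => F t (s0 + h) - F t s0 - h * Hh t)
                    (fun t => f t (s0 + h) - f t s0 - h * g t) y0 Y) as [c [Ec Hc]].
  { intros t Ht. eapply dpl_eq.
    - apply dpl_minus; [apply dpl_minus; [apply (HF _ Hs); auto | apply (HF _ Hs0); auto]|].
      apply dpl_mult; [apply dpl_const | apply HH; auto].
    - cbv beta. ring. }
  cbv beta in Ec. rewrite HF0, HF0, HH0 in Ec by auto.
  replace (0 - 0 - h * 0) with 0 in Ec by ring. rewrite Rminus_0_r in Ec.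
  pose proof (Hb (s0 + h) c Hs Hc) as Hbc. replace (s0 + h - s0) with h in Hbc by ring.
  replace ((F Y (s0 + h) - F Y s0) / h - Hh Y)
    with ((F Y (s0 + h) - F Y s0 - h * Hh Y) / h) by (field; auto).
  unfold Rdiv. rewrite Rabs_mult, Ec, Rabs_inv by auto.
  assert (Hp : 0 < Rabs h) by (apply Rabs_pos_lt; auto).
  apply Rle_lt_trans with (C * (h * h) * Rabs (Y - y0) * / Rabs h).
  { apply Rmult_le_compat_r; [left; apply Rinv_0_lt_compat; auto|].
    apply Rmult_le_compat_r; [apply Rabs_pos | auto]. }
  rewrite <- (sq_abs h).
  replace (C * (Rabs h * Rabs h) * Rabs (Y - y0) * / Rabs h)
    with (C * Rabs (Y - y0) * Rabs h) by (field; lra).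
  apply Rle_lt_trans with (A * Rabs h). { unfold A. pose proof (Rabs_pos (Y - y0)). nra. }
  apply Rmult_lt_reg_l with (/ A). { apply Rinv_0_lt_compat; auto. }
  replace (/ A * (A * Rabs h)) with (Rabs h) by (field; lra).
  replace (/ A * eps) with (eps / A) by (unfold Rdiv; ring). auto.
Qed.

(** ** The kernel  P0(x,u) = Im ln((x - iu)/(x + iu)) = -2 atan(u/x)  *)

(* [DD x u = |x + iu|^2]; the kernel and its partial derivatives up to order 3
   (a letter [x] or [u] per differentiation). *)
Definition DD (x u : R) := x * x + u * u.
Definition P0 x u := -2 * atan (u / x).
Definition Px x u := 2 * u / DD x u.
Definition Pu x u := -2 * x / DD x u.
Definition Pxx x u := -4 * x * u / (DD x u * DD x u).
Definition Pxu x u := 2 * (x * x - u * u) / (DD x u * DD x u).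
Definition Puu x u := 4 * x * u / (DD x u * DD x u).
Definition Pxxx x u := (12 * x * x * u - 4 * u * u * u) / (DD x u * DD x u * DD x u).
Definition Pxuu x u := (4 * u * u * u - 12 * u * x * x) / (DD x u * DD x u * DD x u).
Definition Pxxu x u := (12 * x * u * u - 4 * x * x * x) / (DD x u * DD x u * DD x u).
Definition Puuu x u := (4 * x * x * x - 12 * x * u * u) / (DD x u * DD x u * DD x u).

Ltac kernel_der := intros x u Hx;
  unfold P0, Px, Pu, Pxx, Pxu, Puu, Pxxx, Pxuu, Pxxu, Puuu, DD;
  eapply dpl_eq; [ dpl | .. ]; cbv beta;
  try (apply Rgt_not_eq; repeat apply Rmult_lt_0_compat; nra);
  try (field; repeat split; apply Rgt_not_eq; repeat apply Rmult_lt_0_compat; nra).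

Lemma P0_dx : forall x u, 0 < x -> derivable_pt_lim (fun s => P0 s u) x (Px x u).
Proof. kernel_der. Qed.
Lemma P0_du : forall x u, 0 < x -> derivable_pt_lim (fun w => P0 x w) u (Pu x u).
Proof. kernel_der. Qed.
Lemma Px_dx : forall x u, 0 < x -> derivable_pt_lim (fun s => Px s u) x (Pxx x u).
Proof. kernel_der. Qed.
Lemma Px_du : forall x u, 0 < x -> derivable_pt_lim (fun w => Px x w) u (Pxu x u).
Proof. kernel_der. Qed.
Lemma Pu_dx : forall x u, 0 < x -> derivable_pt_lim (fun s => Pu s u) x (Pxu x u).
Proof. kernel_der. Qed.
Lemma Pu_du : forall x u, 0 < x -> derivable_pt_lim (fun w => Pu x w) u (Puu x u).
Proof. kernel_der. Qed.
Lemma Pxx_dx : forall x u, 0 < x -> derivable_pt_lim (fun s => Pxx s u) x (Pxxx x u).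
Proof. kernel_der. Qed.
Lemma Pxx_du : forall x u, 0 < x -> derivable_pt_lim (fun w => Pxx x w) u (Pxxu x u).
Proof. kernel_der. Qed.
Lemma Pxu_dx : forall x u, 0 < x -> derivable_pt_lim (fun s => Pxu s u) x (Pxxu x u).
Proof. kernel_der. Qed.
Lemma Pxu_du : forall x u, 0 < x -> derivable_pt_lim (fun w => Pxu x w) u (Pxuu x u).
Proof. kernel_der. Qed.
Lemma Puu_du : forall x u, 0 < x -> derivable_pt_lim (fun w => Puu x w) u (Puuu x u).
Proof. kernel_der. Qed.

Lemma P_harmonic x u : 0 < x -> Pxx x u + Puu x u = 0.
Proof. intros Hx. unfold Pxx, Puu, DD. field. apply Rgt_not_eq; nra. Qed.

(* Uniform bounds on the half-plane x >= m > 0, needed for the Taylor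
   remainders when differentiating under the primitive. *)
Lemma kernel_bound2 x u m : 0 < m <= x ->
  Rabs (4 * x * u / (DD x u * DD x u)) <= 2 / (m * m).
Proof.
  intros Hm. unfold DD. set (D := x * x + u * u).
  assert (HD : m * m <= D) by (unfold D; nra).
  assert (A : Rabs (4 * x * u) <= 2 * D).
  { unfold D. pose proof (Rle_0_sqr (x - u)); pose proof (Rle_0_sqr (x + u)); unfold Rsqr in *.
    apply Rabs_le. split; nra. }
  assert (HD0 : 0 < D) by nra.
  pose proof (Rmult_lt_0_compat D D HD0 HD0) as HDD.
  unfold Rdiv. rewrite Rabs_mult, Rabs_inv, (Rabs_right (D * D)) by lra.
  apply Rle_trans with (2 * D * / (D * D)).
  - apply Rmult_le_compat_r; [left; apply Rinv_0_lt_compat; exact HDD | exact A].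
  - replace (2 * D * / (D * D)) with (2 * / D) by (field; lra).
    apply Rmult_le_compat_l; [lra|]. apply Rinv_le_contravar; nra.
Qed.

Lemma cubic_numerator_bound a c : (4 * a * (3 * c * c - a * a)) * (4 * a * (3 * c * c - a * a)) <=
  144 * ((a * a + c * c) * (a * a + c * c) * (a * a + c * c)).
Proof.
  assert (H1 : (3 * c * c - a * a) * (3 * c * c - a * a) <= 9 * ((a * a + c * c) * (a * a + c * c))) by nra.
  replace ((4 * a * (3 * c * c - a * a)) * (4 * a * (3 * c * c - a * a)))
    with (16 * (a * a) * ((3 * c * c - a * a) * (3 * c * c - a * a))) by ring.
  apply Rle_trans with (16 * (a * a) * (9 * ((a * a + c * c) * (a * a + c * c)))).
  - apply Rmult_le_compat_l; nra.
  - assert (0 <= (a * a + c * c) * (a * a + c * c)) by nra. nra.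
Qed.

Lemma kernel_bound3 x u m N : 0 < m <= x -> N * N <= 144 * (DD x u * DD x u * DD x u) ->
  Rabs (N / (DD x u * DD x u * DD x u)) <= 12 / (m * m * m).
Proof.
  intros Hm HN. unfold DD in *. set (D := x * x + u * u) in *.
  assert (HD : m * m <= D) by (unfold D; nra).
  assert (Hm3 : 0 < m * m * m) by (repeat apply Rmult_lt_0_compat; lra).
  assert (HD3 : 0 < D * D * D) by (repeat apply Rmult_lt_0_compat; nra).
  assert (Hmm : m * m * m * (m * m * m) <= D * D * D).
  { assert (0 <= m * m) by nra. assert (m * m * (m * m) <= D * D) by nra.
    replace (m * m * m * (m * m * m)) with (m * m * (m * m) * (m * m)) by ring. nra. }
  (* |N| m^3 <= 12 D^3, by comparing squares *)
  assert (Key : Rabs N * (m * m * m) <= 12 * (D * D * D)).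
  { apply Rsqr_incr_0_var; [| nra].
    unfold Rsqr. rewrite <- (sq_abs N) in HN.
    pose proof (Rabs_pos N). nra. }
  assert (HD0 : D <> 0) by (intro E; rewrite E in HD3; lra).
  assert (Hm0 : m <> 0) by lra.
  unfold Rdiv. rewrite Rabs_mult, Rabs_inv, (Rabs_right (D * D * D)) by lra.
  apply (Rmult_le_reg_r (D * D * D * (m * m * m))); [nra|].
  replace (Rabs N * / (D * D * D) * (D * D * D * (m * m * m))) with (Rabs N * (m * m * m))
    by (field; auto).
  replace (12 * / (m * m * m) * (D * D * D * (m * m * m))) with (12 * (D * D * D))
    by (field; auto).
  exact Key.
Qed.

Lemma Pxx_bound x u m : 0 < m <= x -> Rabs (Pxx x u) <= 2 / (m * m).
Proof.
  intros. unfold Pxx.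
  replace (-4 * x * u / (DD x u * DD x u)) with (- (4 * x * u / (DD x u * DD x u)))
    by (unfold Rdiv; ring).
  rewrite Rabs_Ropp. apply kernel_bound2; auto.
Qed.
Lemma Puu_bound x u m : 0 < m <= x -> Rabs (Puu x u) <= 2 / (m * m).
Proof. intros. apply kernel_bound2; auto. Qed.
Lemma Pxxx_bound x u m : 0 < m <= x -> Rabs (Pxxx x u) <= 12 / (m * m * m).
Proof. intros. apply kernel_bound3; auto. unfold DD. pose proof (cubic_numerator_bound u x). nra. Qed.
Lemma Pxuu_bound x u m : 0 < m <= x -> Rabs (Pxuu x u) <= 12 / (m * m * m).
Proof. intros. apply kernel_bound3; auto. unfold DD. pose proof (cubic_numerator_bound u x). nra. Qed.
Lemma Pxxu_bound x u m : 0 < m <= x -> Rabs (Pxxu x u) <= 12 / (m * m * m).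
Proof. intros. apply kernel_bound3; auto. unfold DD. pose proof (cubic_numerator_bound x u). nra. Qed.
Lemma Puuu_bound x u m : 0 < m <= x -> Rabs (Puuu x u) <= 12 / (m * m * m).
Proof. intros. apply kernel_bound3; auto. unfold DD. pose proof (cubic_numerator_bound x u). nra. Qed.

Section ShiftedPrimitives.
Variables (k k1 : R -> R) (y0 : R).
Hypothesis Hkd : forall t, derivable_pt_lim k t (k1 t).

Lemma shifted_continuous (A : R -> R) v t :
  (forall w, exists l, derivable_pt_lim A w l) -> continuity_pt (fun t => A (v - 2 * k t)) t.
Proof.
  intros HA. destruct (HA (v - 2 * k t)) as [l Hl].
  apply derivable_continuous_pt. exists (l * (0 - (0 * k t + 2 * k1 t))).
  apply (dpl_comp (fun t => v - 2 * k t) A); [|exact Hl].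
  apply dpl_minus; [apply dpl_const|]. apply dpl_mult; [apply dpl_const | apply Hkd].
Qed.

Lemma shifted_primitive_spec (A : R -> R) v Y :
  (forall w, exists l, derivable_pt_lim A w l) ->
  PrimF y0 (fun t => A (v - 2 * k t)) Y y0 = 0 /\
  forall t, Rmin y0 Y <= t <= Rmax y0 Y ->
    derivable_pt_lim (PrimF y0 (fun t => A (v - 2 * k t)) Y) t (A (v - 2 * k t)).
Proof. intros HA. apply PrimF_spec. intros t _. apply shifted_continuous; auto. Qed.

Lemma derive_primitive_x (A A1 A2 : R -> R -> R) (F : R -> R -> R) Y x v B :
  0 < x ->
  (forall s u, 0 < s -> derivable_pt_lim (fun s => A s u) s (A1 s u)) ->
  (forall s u, 0 < s -> derivable_pt_lim (fun s => A1 s u) s (A2 s u)) ->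
  (forall s u, x / 2 <= s -> Rabs (A2 s u) <= B) ->
  (forall w, exists l, derivable_pt_lim (fun u => A1 x u) w l) ->
  (forall s, Rabs (s - x) < x / 2 -> forall t, Rmin y0 Y <= t <= Rmax y0 Y ->
     derivable_pt_lim (fun t => F t s) t (A s (v - 2 * k t))) ->
  (forall s, Rabs (s - x) < x / 2 -> F y0 s = 0) ->
  derivable_pt_lim (fun s => F Y s) x (PrimF y0 (fun t => A1 x (v - 2 * k t)) Y Y).
Proof.
  intros Hx HA HA1 HB Hc HF HF0.
  assert (HB0 : 0 <= B) by (eapply Rle_trans; [apply Rabs_pos | apply (HB x 0); lra]).
  destruct (shifted_primitive_spec (fun u => A1 x u) v Y Hc) as [P0' P1'].
  apply (derive_param_primitive F (fun t s => A s (v - 2 * k t)) _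
           (fun t => A1 x (v - 2 * k t)) y0 Y x (x/2) B); auto; [lra|].
  intros s t Hs Ht.
  assert (Hpos : forall s', Rabs (s' - x) < x / 2 -> 0 < s')
    by (intros s' Hs'; apply Rabs_def2 in Hs'; lra).
  apply (taylor2_bound (fun s => A s (v - 2 * k t)) (fun s => A1 s (v - 2 * k t))
           (fun s => A2 s (v - 2 * k t)) x (x/2) B); auto; [lra|].
  intros s' Hs'. apply HB. apply Rabs_def2 in Hs'; lra.
Qed.

Lemma dpl_shift (A A1 : R -> R) c s : derivable_pt_lim A (s - c) (A1 (s - c)) ->
  derivable_pt_lim (fun s => A (s - c)) s (A1 (s - c)).
Proof.
  intros H. eapply dpl_eq.
  - apply (dpl_comp (fun s => s - c) A); [dpl | exact H].
  - ring.
Qed.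

Lemma derive_primitive_v (A A1 A2 : R -> R -> R) (F : R -> R -> R) Y x v B :
  0 < x ->
  (forall u, derivable_pt_lim (fun w => A x w) u (A1 x u)) ->
  (forall u, derivable_pt_lim (fun w => A1 x w) u (A2 x u)) ->
  (forall u, Rabs (A2 x u) <= B) ->
  (forall s, Rabs (s - v) < 1 -> forall t, Rmin y0 Y <= t <= Rmax y0 Y ->
     derivable_pt_lim (fun t => F t s) t (A x (s - 2 * k t))) ->
  (forall s, Rabs (s - v) < 1 -> F y0 s = 0) ->
  derivable_pt_lim (fun s => F Y s) v (PrimF y0 (fun t => A1 x (v - 2 * k t)) Y Y).
Proof.
  intros Hx HA HA1 HB HF HF0.
  assert (HB0 : 0 <= B) by (eapply Rle_trans; [apply Rabs_pos | apply (HB 0)]).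
  destruct (shifted_primitive_spec (fun u => A1 x u) v Y) as [P0' P1'].
  { intros w; exists (A2 x w); auto. }
  apply (derive_param_primitive F (fun t s => A x (s - 2 * k t)) _
           (fun t => A1 x (v - 2 * k t)) y0 Y v 1 B); auto; [lra|].
  intros s t Hs Ht.
  apply (taylor2_bound (fun s => A x (s - 2 * k t)) (fun s => A1 x (s - 2 * k t))
           (fun s => A2 x (s - 2 * k t)) v 1 B); auto; [lra | |].
  - intros s' _. apply dpl_shift. apply HA.
  - intros s' _. apply dpl_shift. apply HA1.
Qed.
End ShiftedPrimitives.

Lemma Cconj_add a c : Cadd (Cconj a) (Cconj c) = Cconj (Cadd a c).
Proof. unfold Cconj, Cadd; simpl; f_equal; ring. Qed.
Lemma Cmul_conj a c : Cmul (Cconj a) (Cconj c) = Cconj (Cmul a c).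
Proof. unfold Cconj, Cmul; simpl; f_equal; ring. Qed.
Lemma Cmul_div w a : w <> (0,0) -> Cmul w (Cdiv a w) = a.
Proof.
  intros Hw. pose proof (Cnorm2_neq0 w Hw) as Hn.
  destruct w as [w1 w2], a as [a1 a2]; simpl in Hn.
  unfold Cdiv, Cmul, Cinv; simpl. f_equal; field; simpl; lra.
Qed.

Lemma HD_RqR (h : R -> R) q : HasDer0 (fun t => RtoC (h (snd (Cadd q (t,0))))) (0,0).
Proof.
  apply (HD_loc (fun _ => RtoC (h (snd q))) _ _ 1); [lra | | apply HD_const].
  intros t _; simpl; rewrite Rplus_0_r; auto.
Qed.
Lemma HD_RqI (h : R -> R) q a : derivable_pt_lim h (snd q) a ->
  HasDer0 (fun t => RtoC (h (snd (Cadd q (0,t))))) (RtoC a).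
Proof. intros H. apply HD_RtoC. simpl. apply dpl_shift0; auto. Qed.

Lemma HD_lnzR z : 0 < fst z ->
  HasDer0 (fun t => RtoC (ln (fst (Cadd z (t,0)) + fst (Cadd z (t,0))))) (RtoC (/ fst z)).
Proof.
  intros Hx. apply HD_RtoC. simpl. eapply dpl_eq.
  - apply dpl_ln; [dpl | lra].
  - cbv beta. field. lra.
Qed.
Lemma HD_lnzI z : HasDer0 (fun t => RtoC (ln (fst (Cadd z (0,t)) + fst (Cadd z (0,t))))) (0,0).
Proof.
  apply (HD_loc (fun _ => RtoC (ln (fst z + fst z))) _ _ 1); [lra | | apply HD_const].
  intros t _; simpl; rewrite Rplus_0_r; auto.
Qed.
Lemma HD_divzR c z : 0 < fst z ->
  HasDer0 (fun t => RtoC (c / fst (Cadd z (t,0)))) (RtoC (- c / (fst z * fst z))).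
Proof.
  intros Hx. apply HD_RtoC. simpl. eapply dpl_eq.
  - apply dpl_div; [dpl | dpl | cbv beta; lra].
  - cbv beta. field. lra.
Qed.
Lemma HD_divzI c z : HasDer0 (fun t => RtoC (c / fst (Cadd z (0,t)))) (0,0).
Proof.
  apply (HD_loc (fun _ => RtoC (c / fst z)) _ _ 1); [lra | | apply HD_const].
  intros t _; simpl; rewrite Rplus_0_r; auto.
Qed.

Lemma HD_Cln2R z : 0 < fst z ->
  HasDer0 (fun t => Cln (Cadd (Cadd z (t,0)) (Cconj (Cadd z (t,0))))) (RtoC (/ fst z)).
Proof.
  intros Hx. apply (HD_loc (fun t => RtoC (ln (fst (Cadd z (t,0)) + fst (Cadd z (t,0))))) _ _ (fst z));
    [exact Hx | | apply HD_lnzR; exact Hx].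
  intros t Ht. apply Rabs_def2 in Ht. rewrite Cln_twice_re; [reflexivity|]. simpl; lra.
Qed.
Lemma HD_Cln2I z : 0 < fst z ->
  HasDer0 (fun t => Cln (Cadd (Cadd z (0,t)) (Cconj (Cadd z (0,t))))) (0,0).
Proof.
  intros Hx. apply (HD_loc (fun t => RtoC (ln (fst (Cadd z (0,t)) + fst (Cadd z (0,t))))) _ _ 1);
    [lra | | apply HD_lnzI].
  intros t Ht. rewrite Cln_twice_re; [reflexivity|]. simpl; lra.
Qed.

(** ** The equation for  psi = B + rho *)

Definition psiB (b : Cx -> Cx) (L : Cx -> Cx -> Cx) (G : Cx -> R) (q z : Cx) : Cx :=
  (((q + b z) * L q z) + ((Cconj q + Cconj (b z)) * Cconj (L q z))
     - ((q + Cconj q) * (Cln (z + Cconj z) + RtoC 1)) + RtoC (G z))%C.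

Definition psi1 b L G (r : R -> R) q z : Cx := Cadd (psiB b L G q z) (RtoC (r (yof q))).
Definition psi2 b L G (r : R -> R) q z : Cx :=
  (psi1 b L G r q z + RtoC 2 * Ci * RtoC (yof q) * Cln (Cconj z / z))%C.
Definition psi3 b L G (r : R -> R) (K : R -> Cx -> Cx) q z : Cx :=
  (psi1 b L G r q z + RtoC 2 * Ci * K (yof q) z)%C.

Section Solutions.
Variables (U : Cx -> Cx -> Prop) (b b' : Cx -> Cx) (L : Cx -> Cx -> Cx) (G : Cx -> R).
Hypothesis HU : Open2 U.
Hypothesis Hz : forall q z, U q z -> 0 < Re (Cadd z (Cconj z)).
Hypothesis Hb : forall q z, U q z -> CDeriv b z (b' z).
Hypothesis Hb' : forall q z, U q z -> exists l, CDeriv b' z l.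
Hypothesis HLexp : forall q z, U q z -> Cexp (L q z) = Cadd q (b z).
Hypothesis HLcont : ContinuousOn2 U L.
Hypothesis HG : forall q z, U q z ->
      PartDiff (fun w => RtoC (G w)) z /\
      PartDiff (Wd (fun w => RtoC (G w))) z /\
      Wdb (Wd (fun w => RtoC (G w))) z =
        Cdiv (Cadd (b z) (Cconj (b z)))
             (Cmul (Cadd z (Cconj z)) (Cadd z (Cconj z))).

Lemma U_re_pos q z : U q z -> 0 < fst z.
Proof. intros H. pose proof (Hz q z H) as Hp. unfold Re, Cadd, Cconj in Hp; simpl in Hp. lra. Qed.

(* q + b(z) has a logarithm, hence does not vanish. *)
Lemma q_plus_b_neq0 q z : U q z -> Cadd q (b z) <> (0,0).
Proof.
  intros H E. pose proof (Cexp_sqnorm (L q z)) as N.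
  rewrite HLexp, E in N by exact H. simpl in N.
  pose proof (exp_pos (fst (L q z))). nra.
Qed.

Lemma q_plus_b_norm2_neq0 q z : U q z -> (fst q + fst (b z)) ^ 2 + (snd q + snd (b z)) ^ 2 <> 0.
Proof. intros H. exact (Cnorm2_neq0 _ (q_plus_b_neq0 q z H)). Qed.

Lemma HD_agree (F E : Cx -> Cx -> Cx) (qp zp : R -> Cx) q z l :
  U q z -> (forall q z, U q z -> F q z = E q z) ->
  (forall t, Cmod (Csub (qp t) q) <= Rabs t) -> (forall t, Cmod (Csub (zp t) z) <= Rabs t) ->
  HasDer0 (fun t => E (qp t) (zp t)) l -> HasDer0 (fun t => F (qp t) (zp t)) l.
Proof.
  intros H HFE Hqp Hzp HE. destruct (HU q z H) as [e [He Hf]].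
  apply (HD_loc (fun t => E (qp t) (zp t)) _ _ e He); [|exact HE].
  intros t Ht. symmetry. apply HFE, Hf; eapply Rle_lt_trans; eauto.
Qed.

Lemma HD_L (qp zp : R -> Cx) (q z g : Cx) : U q z -> qp 0 = q -> zp 0 = z ->
  (forall t, Cmod (Csub (qp t) q) <= Rabs t) -> (forall t, Cmod (Csub (zp t) z) <= Rabs t) ->
  HasDer0 (fun t => Cadd (qp t) (b (zp t))) g ->
  HasDer0 (fun t => L (qp t) (zp t)) (Cdiv g (Cadd q (b z))).
Proof.
  intros H Hq0 Hz0 Hqp Hzp Hg.
  destruct (HU q z H) as [e [He Hf]].
  assert (HUt : forall t, Rabs t < e -> U (qp t) (zp t)).
  { intros t Ht; apply Hf; eapply Rle_lt_trans; eauto. }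
  replace (Cadd q (b z)) with ((fun t => Cadd (qp t) (b (zp t))) 0) by (rewrite Hq0, Hz0; auto).
  apply (continuous_log_der (fun t => L (qp t) (zp t)) (fun t => Cadd (qp t) (b (zp t))) g e);
    auto.
  - intros eps Heps. destruct (HLcont q z H eps Heps) as [dl [Hdl Hc]].
    exists (Rmin e dl); split; [apply Rmin_pos; auto|]. intros t Ht.
    assert (Rabs t < e) by (eapply Rlt_le_trans; [exact Ht | apply Rmin_l]).
    assert (Rabs t < dl) by (eapply Rlt_le_trans; [exact Ht | apply Rmin_r]).
    rewrite Hq0, Hz0. apply Hc; auto; eapply Rle_lt_trans; eauto.
  - cbv beta. rewrite Hq0, Hz0. apply q_plus_b_neq0; auto.
Qed.

Lemma HD_LqR q z : U q z -> HasDer0 (fun t => L (Cadd q (t,0)) z) (Cdiv (1,0) (Cadd q (b z))).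
Proof.
  intros H. apply (HD_L (fun t => Cadd q (t,0)) (fun _ => z)); auto using lineR_le, const_le.
  - apply Cadd_00.
  - eapply HD_eq; [HD|]. unfold Cadd; simpl; f_equal; ring.
Qed.
Lemma HD_LqI q z : U q z -> HasDer0 (fun t => L (Cadd q (0,t)) z) (Cdiv (0,1) (Cadd q (b z))).
Proof.
  intros H. apply (HD_L (fun t => Cadd q (0,t)) (fun _ => z)); auto using lineI_le, const_le.
  - apply Cadd_00.
  - eapply HD_eq; [HD|]. unfold Cadd; simpl; f_equal; ring.
Qed.
Lemma HD_LzR q z : U q z -> HasDer0 (fun t => L q (Cadd z (t,0))) (Cdiv (b' z) (Cadd q (b z))).
Proof.
  intros H. apply (HD_L (fun _ => q) (fun t => Cadd z (t,0))); auto using lineR_le, const_le.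
  - apply Cadd_00.
  - eapply HD_eq; [apply HD_add; [apply HD_const | apply CD_lineR; eauto]|]. apply Cadd_0l.
Qed.
Lemma HD_LzI q z : U q z ->
  HasDer0 (fun t => L q (Cadd z (0,t))) (Cdiv (Cmul Ci (b' z)) (Cadd q (b z))).
Proof.
  intros H. apply (HD_L (fun _ => q) (fun t => Cadd z (0,t))); auto using lineI_le, const_le.
  - apply Cadd_00.
  - eapply HD_eq; [apply HD_add; [apply HD_const | apply CD_lineI; eauto]|]. apply Cadd_0l.
Qed.

(* The exponential factor of the equation:
   exp(L + conj L - 2 ln(2 Re z)) = |q + b|^2 / (2 Re z)^2  (the i c/2 terms cancel). *)
Lemma exp_log_sum q z c : U q z -> 0 < fst z ->
  Cexp (Cadd (Csub (Csub (L q z) (RtoC (ln (fst z + fst z)))) (Cmul (Cmul Ci (RtoC (/2))) (RtoC c)))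
             (Cadd (Csub (Cconj (L q z)) (RtoC (ln (fst z + fst z))))
                   (Cmul (Cmul Ci (RtoC (/2))) (RtoC c)))) =
  RtoC (((fst q + fst (b z)) ^ 2 + (snd q + snd (b z)) ^ 2) / ((fst z + fst z) * (fst z + fst z))).
Proof.
  intros H Hx. pose proof (Cexp_sqnorm (L q z)) as N. rewrite HLexp in N by exact H.
  unfold Cadd at 1 2 in N; cbn [fst snd] in N. rewrite N.
  unfold Cexp, Csub, Cadd, Copp, Cmul, Cconj, RtoC, Ci; cbn [fst snd]. f_equal.
  - match goal with |- exp ?A * cos ?B = _ => replace B with 0 by ring;
      replace A with (fst (L q z) + fst (L q z) + - ln (fst z + fst z) + - ln (fst z + fst z))
        by ring end.
    rewrite cos_0, !exp_plus, !exp_Ropp, exp_ln by lra. field.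
    repeat split; try lra; apply Rgt_not_eq, exp_pos.
  - match goal with |- exp ?A * sin ?B = _ => replace B with 0 by ring end. rewrite sin_0. ring.
Qed.

(* psi = B + rho(Im q, z) for a real function rho whose partial derivatives
   (indices y, x = Re z, v = Im z) are given below. *)
Section Perturbation.
Variables (rho rho_y rho_yy rho_x rho_v rho_yx rho_yv rho_xx rho_xv rho_vv : R -> Cx -> R).
Hypothesis rho_dy : forall y z, 0 < fst z ->
  derivable_pt_lim (fun t => rho t z) y (rho_y y z).
Hypothesis rho_dyy : forall y z, 0 < fst z ->
  derivable_pt_lim (fun t => rho_y t z) y (rho_yy y z).
Hypothesis rho_dx : forall y z, 0 < fst z ->
  derivable_pt_lim (fun t => rho y (Cadd z (t,0))) 0 (rho_x y z).
Hypothesis rho_dv : forall y z, 0 < fst z ->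
  derivable_pt_lim (fun t => rho y (Cadd z (0,t))) 0 (rho_v y z).
Hypothesis rho_y_dx : forall y z, 0 < fst z ->
  derivable_pt_lim (fun t => rho_y y (Cadd z (t,0))) 0 (rho_yx y z).
Hypothesis rho_y_dv : forall y z, 0 < fst z ->
  derivable_pt_lim (fun t => rho_y y (Cadd z (0,t))) 0 (rho_yv y z).
Hypothesis rho_x_dx : forall y z, 0 < fst z ->
  derivable_pt_lim (fun t => rho_x y (Cadd z (t,0))) 0 (rho_xx y z).
Hypothesis rho_x_dv : forall y z, 0 < fst z ->
  derivable_pt_lim (fun t => rho_x y (Cadd z (0,t))) 0 (rho_xv y z).
Hypothesis rho_v_dx : forall y z, 0 < fst z ->
  derivable_pt_lim (fun t => rho_v y (Cadd z (t,0))) 0 (rho_xv y z).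
Hypothesis rho_v_dv : forall y z, 0 < fst z ->
  derivable_pt_lim (fun t => rho_v y (Cadd z (0,t))) 0 (rho_vv y z).
Hypothesis rho_harmonic : forall y z, 0 < fst z -> rho_xx y z + rho_vv y z = 0.
Hypothesis rho_y_eikonal : forall y z, 0 < fst z ->
  rho_yv y z * rho_yv y z + rho_yx y z * rho_yx y z = 4 * rho_yv y z / fst z.

Variable psi : Cx -> Cx -> Cx.
Hypothesis Hpsi : forall q z, 0 < fst z -> psi q z = Cadd (psiB b L G q z) (RtoC (rho (yof q) z)).

Definition Psi_q q z := Csub (Csub (L q z) (RtoC (ln (fst z + fst z))))
   (Cmul (Cmul Ci (RtoC (/2))) (RtoC (rho_y (snd q) z))).
Definition Psi_qb q z := Cadd (Csub (Cconj (L q z)) (RtoC (ln (fst z + fst z))))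
   (Cmul (Cmul Ci (RtoC (/2))) (RtoC (rho_y (snd q) z))).
Definition Psi_z q z := Cadd (Cadd (Csub (Cmul (b' z) (Cadd (L q z) (RtoC 1)))
     (RtoC (fst q / fst z))) (Wd (fun w => RtoC (G w)) z))
   (Cmul (RtoC (/2)) (Csub (RtoC (rho_x (snd q) z)) (Cmul Ci (RtoC (rho_v (snd q) z))))).
Definition Psi_qq (q z : Cx) := Csub (Cdiv (1,0) (Cadd q (b z))) (RtoC (rho_yy (snd q) z / 4)).
Definition Psi_qqb (q z : Cx) : Cx := RtoC (rho_yy (snd q) z / 4).
Definition Psi_qbqb (q z : Cx) :=
  Csub (Cconj (Cdiv (1,0) (Cadd q (b z)))) (RtoC (rho_yy (snd q) z / 4)).
Definition Psi_qzb (q z : Cx) : Cx := ((rho_yv (snd q) z / 2 - / fst z) / 2, - rho_yx (snd q) z / 4).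
Definition Psi_qbz (q z : Cx) : Cx := ((rho_yv (snd q) z / 2 - / fst z) / 2, rho_yx (snd q) z / 4).
Definition Psi_zzb (q z : Cx) := Cadd (RtoC (fst q / (2 * fst z * fst z)))
  (Cadd (Wdb (Wd (fun w => RtoC (G w))) z) ((rho_xx (snd q) z + rho_vv (snd q) z) / 4, 0)).

Lemma HD_psi (qp zp : R -> Cx) d l : 0 < d -> (forall t, Rabs t < d -> 0 < fst (zp t)) ->
  HasDer0 (fun t => Cadd (psiB b L G (qp t) (zp t)) (RtoC (rho (snd (qp t)) (zp t)))) l ->
  HasDer0 (fun t => psi (qp t) (zp t)) l.
Proof.
  intros Hd Hzp. apply (HD_loc _ _ _ d Hd). intros t Ht.
  rewrite Hpsi, yof_eq by auto. reflexivity.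
Qed.

Ltac HD_psi H := repeat first
  [ apply HD_const | apply HD_lineR | apply HD_lineI | apply HD_pairR | apply HD_pairI
  | apply (proj1 (PartDiff_lines _ _ (proj1 (HG _ _ H))))
  | apply (proj2 (PartDiff_lines _ _ (proj1 (HG _ _ H))))
  | apply (proj1 (PartDiff_lines _ _ (proj1 (proj2 (HG _ _ H)))))
  | apply (proj2 (PartDiff_lines _ _ (proj1 (proj2 (HG _ _ H)))))
  | apply (HD_LqR _ _ H) | apply (HD_LqI _ _ H) | apply (HD_LzR _ _ H) | apply (HD_LzI _ _ H)
  | apply (CD_lineR _ _ _ (Hb _ _ H)) | apply (CD_lineI _ _ _ (Hb _ _ H))
  | apply (HD_Cln2R _ (U_re_pos _ _ H)) | apply (HD_Cln2I _ (U_re_pos _ _ H))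
  | apply (HD_lnzR _ (U_re_pos _ _ H)) | apply HD_lnzI
  | apply (HD_divzR _ _ (U_re_pos _ _ H)) | apply HD_divzI
  | apply (HD_RqR (fun y => rho y _)) | apply (HD_RqR (fun y => rho_y y _))
  | apply (HD_RqI (fun y => rho y _)); apply rho_dy; apply (U_re_pos _ _ H)
  | apply (HD_RqI (fun y => rho_y y _)); apply rho_dyy; apply (U_re_pos _ _ H)
  | apply HD_RtoC; first
      [ apply (rho_dx _ _ (U_re_pos _ _ H)) | apply (rho_dv _ _ (U_re_pos _ _ H))
      | apply (rho_y_dx _ _ (U_re_pos _ _ H)) | apply (rho_y_dv _ _ (U_re_pos _ _ H))
      | apply (rho_x_dx _ _ (U_re_pos _ _ H)) | apply (rho_x_dv _ _ (U_re_pos _ _ H))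
      | apply (rho_v_dx _ _ (U_re_pos _ _ H)) | apply (rho_v_dv _ _ (U_re_pos _ _ H)) ]
  | apply HD_add | apply HD_sub | apply HD_opp | apply HD_mul | apply HD_conj ].

Ltac cx_field H :=
  cbv beta; rewrite ?Cadd_00, ?Cln_twice_re by (apply (U_re_pos _ _ H));
  rewrite ?Cconj_add, ?Cmul_conj, ?Cmul_div by (apply (q_plus_b_neq0 _ _ H));
  unfold Psi_q, Psi_qb, Psi_z, Psi_qq, Psi_qqb, Psi_qbqb, Psi_qzb, Psi_qbz, Psi_zzb,
    Wd, Wdb, Cdiv, Cinv, Csub;
  unfold Cadd, Copp, Cmul, Cconj, RtoC, Ci; cbn [fst snd];
  f_equal; field; repeat split;
  first [apply (q_plus_b_norm2_neq0 _ _ H) | pose proof (U_re_pos _ _ H); lra].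

Lemma psi_first_q q z : U q z ->
  Diff_q psi q z /\ dq psi q z = Psi_q q z /\ dqb psi q z = Psi_qb q z.
Proof.
  intros H. pose proof (U_re_pos q z H) as Hx.
  edestruct (Wd_of (fun w => psi w z) q) as [PD [E Eb]];
    [ apply (HD_psi (fun t => Cadd q (t,0)) (fun _ => z) 1); [lra | auto | unfold psiB; HD_psi H]
    | apply (HD_psi (fun t => Cadd q (0,t)) (fun _ => z) 1); [lra | auto | unfold psiB; HD_psi H]
    | ].
  split; [exact PD|]. unfold dq, dqb. rewrite E, Eb. split; cx_field H.
Qed.

Lemma psi_first_z q z : U q z -> Diff_z psi q z /\ dz psi q z = Psi_z q z.
Proof.
  intros H. pose proof (U_re_pos q z H) as Hx.
  edestruct (Wd_of (psi q) z) as [PD [E _]].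
  - apply (HD_psi (fun _ => q) (fun t => Cadd z (t,0)) (fst z)); [lra | |].
    + intros t Ht. apply Rabs_def2 in Ht. simpl; lra.
    + unfold psiB; HD_psi H.
  - apply (HD_psi (fun _ => q) (fun t => Cadd z (0,t)) 1); [lra | intros; simpl; lra |].
    unfold psiB; HD_psi H.
  - split; [exact PD|]. unfold dz. rewrite E. cx_field H.
Qed.

Lemma psi_q_second q z : U q z ->
  Diff_q (dq psi) q z /\ Diff_z (dq psi) q z /\
  dq (dq psi) q z = Psi_qq q z /\ dqb (dq psi) q z = Psi_qqb q z /\
  dzb (dq psi) q z = Psi_qzb q z.
Proof.
  intros H. pose proof (U_re_pos q z H) as Hx.
  assert (E : forall q z, U q z -> dq psi q z = Psi_q q z) by apply psi_first_q.
  edestruct (Wd_of (fun w => dq psi w z) q) as [PDq [Eq Eqb]];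
    [ apply (HD_agree _ Psi_q (fun t => Cadd q (t,0)) (fun _ => z) q z _ H E (lineR_le q) (const_le z))
    | apply (HD_agree _ Psi_q (fun t => Cadd q (0,t)) (fun _ => z) q z _ H E (lineI_le q) (const_le z))
    | ]; [unfold Psi_q; HD_psi H .. |].
  edestruct (Wd_of (dq psi q) z) as [PDz [_ Ezb]];
    [ apply (HD_agree _ Psi_q (fun _ => q) (fun t => Cadd z (t,0)) q z _ H E (const_le q) (lineR_le z))
    | apply (HD_agree _ Psi_q (fun _ => q) (fun t => Cadd z (0,t)) q z _ H E (const_le q) (lineI_le z))
    | ]; [unfold Psi_q; HD_psi H .. |].
  unfold Diff_q, Diff_z, dq, dqb, dzb in *.
  do 2 (split; [assumption|]). rewrite Eq, Eqb, Ezb. repeat split; cx_field H.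
Qed.

Lemma psi_qb_second q z : U q z ->
  Diff_q (dqb psi) q z /\ Diff_z (dqb psi) q z /\
  dqb (dqb psi) q z = Psi_qbqb q z /\ dz (dqb psi) q z = Psi_qbz q z.
Proof.
  intros H. pose proof (U_re_pos q z H) as Hx.
  assert (E : forall q z, U q z -> dqb psi q z = Psi_qb q z) by apply psi_first_q.
  edestruct (Wd_of (fun w => dqb psi w z) q) as [PDq [_ Eqb]];
    [ apply (HD_agree _ Psi_qb (fun t => Cadd q (t,0)) (fun _ => z) q z _ H E (lineR_le q) (const_le z))
    | apply (HD_agree _ Psi_qb (fun t => Cadd q (0,t)) (fun _ => z) q z _ H E (lineI_le q) (const_le z))
    | ]; [unfold Psi_qb; HD_psi H .. |].
  edestruct (Wd_of (dqb psi q) z) as [PDz [Ez _]];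
    [ apply (HD_agree _ Psi_qb (fun _ => q) (fun t => Cadd z (t,0)) q z _ H E (const_le q) (lineR_le z))
    | apply (HD_agree _ Psi_qb (fun _ => q) (fun t => Cadd z (0,t)) q z _ H E (const_le q) (lineI_le z))
    | ]; [unfold Psi_qb; HD_psi H .. |].
  unfold Diff_q, Diff_z, dqb, dz in *.
  do 2 (split; [assumption|]). rewrite Eqb, Ez. split; cx_field H.
Qed.

Lemma psi_z_second q z : U q z -> Diff_z (dz psi) q z /\ dzb (dz psi) q z = Psi_zzb q z.
Proof.
  intros H. pose proof (U_re_pos q z H) as Hx.
  destruct (Hb' q z H) as [b'' Hb''].
  assert (E : forall q z, U q z -> dz psi q z = Psi_z q z) by apply psi_first_z.
  edestruct (Wd_of (dz psi q) z) as [PD [_ Ezb]].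
  - apply (HD_agree _ Psi_z (fun _ => q) (fun t => Cadd z (t,0)) q z _ H E (const_le q) (lineR_le z)).
    unfold Psi_z; HD_psi H; apply (CD_lineR _ _ _ Hb'').
  - apply (HD_agree _ Psi_z (fun _ => q) (fun t => Cadd z (0,t)) q z _ H E (const_le q) (lineI_le z)).
    unfold Psi_z; HD_psi H; apply (CD_lineI _ _ _ Hb'').
  - unfold Diff_z, dzb in *. split; [assumption|]. rewrite Ezb.
    unfold Psi_zzb, Wdb. set (WG := Wd (fun w => RtoC (G w))). clearbody WG. cx_field H.
Qed.

Theorem rho_perturbation_solves : IsSolution U psi.
Proof.
  intros q z H. pose proof (U_re_pos q z H) as Hx.
  destruct (psi_first_q q z H) as [D1 [V1 V1b]].
  destruct (psi_first_z q z H) as [D2 V2].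
  destruct (psi_q_second q z H) as [D3 [D4 [W1 [W2 W3]]]].
  destruct (psi_qb_second q z H) as [D5 [D6 [W4 W5]]].
  destruct (psi_z_second q z H) as [D7 W6].
  do 7 (split; [assumption|]).
  rewrite V1, V1b, W1, W2, W3, W4, W5, W6.
  unfold Psi_q, Psi_qb. rewrite exp_log_sum by auto.
  assert (Zzb : Psi_zzb q z = RtoC ((fst q + fst (b z)) / (2 * fst z * fst z))).
  { unfold Psi_zzb. rewrite (proj2 (proj2 (HG q z H))), rho_harmonic by exact Hx.
    unfold Cdiv, Cinv, Cadd, Cmul, Cconj, RtoC; cbn [fst snd].
    f_equal; field; repeat split; try lra;
      replace (snd z + - snd z) with 0 by ring; apply Rgt_not_eq; ring_simplify;
      pose proof (pow_lt (fst z) 4 Hx); lra. }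
  assert (Mixed : Cmul (Psi_qzb q z) (Psi_qbz q z) = RtoC (/ (4 * fst z * fst z))).
  { pose proof (rho_y_eikonal (snd q) z Hx) as Eik.
    unfold Psi_qzb, Psi_qbz, Cmul, RtoC; cbn [fst snd]. f_equal; [|field; lra].
    set (a := rho_yv (snd q) z) in *. set (c := rho_yx (snd q) z) in *.
    transitivity ((a / 2 - / fst z) / 2 * ((a / 2 - / fst z) / 2) + c * c / 16); [field; lra|].
    replace (c * c) with (4 * a / fst z - a * a) by lra. field. lra. }
  pose proof (q_plus_b_norm2_neq0 q z H) as HQ.
  assert (Hess : Csub (Cmul (Psi_qqb q z) (Psi_qqb q z)) (Cmul (Psi_qq q z) (Psi_qbqb q z)) =
     RtoC ((-1 + 2 * (rho_yy (snd q) z / 4) * (fst q + fst (b z))) /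
           ((fst q + fst (b z)) ^ 2 + (snd q + snd (b z)) ^ 2))).
  { unfold Psi_qq, Psi_qqb, Psi_qbqb, Csub, Cdiv, Cinv, Cadd, Copp, Cmul, Cconj, RtoC;
      cbn [fst snd]. f_equal; field; auto. }
  rewrite Zzb, Mixed, Hess. unfold Psi_qqb, Csub, Cadd, Copp, Cmul, RtoC; cbn [fst snd].
  f_equal; field; split; lra || auto.
Qed.

End Perturbation.

Section Instances.
Variables (r r1 r2 : R -> R).
Hypothesis Hr1 : forall y, derivable_pt_lim r y (r1 y).
Hypothesis Hr2 : forall y, derivable_pt_lim r1 y (r2 y).

Lemma psi1_solution : IsSolution U (psi1 b L G r).
Proof.
  apply (rho_perturbation_solves (fun y _ => r y) (fun y _ => r1 y) (fun y _ => r2 y)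
    (fun _ _ => 0) (fun _ _ => 0) (fun _ _ => 0) (fun _ _ => 0)
    (fun _ _ => 0) (fun _ _ => 0) (fun _ _ => 0));
    try (intros y z _; first [apply Hr1 | apply Hr2 | apply dpl_const]).
  - intros y z _; ring.
  - intros y z Hx; field; lra.
  - intros q z _; reflexivity.
Qed.

(* psi3: rho = r(y) - 2 Im K(y,z), where Re K = 0 and
   Im K(y,z) = primitive in y of P0(Re z, Im z - 2 k(y)) vanishing at y0. *)
Variables (k k1 : R -> R) (y0 : R) (K : R -> Cx -> Cx).
Hypothesis Hkd : forall t, derivable_pt_lim k t (k1 t).
Hypothesis HK0 : forall z, 0 < Re (Cadd z (Cconj z)) -> K y0 z = (0, 0).
Hypothesis HK : forall z, 0 < Re (Cadd z (Cconj z)) -> forall y,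
      let integrand :=
        Cln (Cdiv (Cadd (Cconj z) (Cmul (RtoC 2) (Cmul Ci (RtoC (k y)))))
                  (Csub z (Cmul (RtoC 2) (Cmul Ci (RtoC (k y)))))) in
      derivable_pt_lim (fun t => fst (K t z)) y (fst integrand) /\
      derivable_pt_lim (fun t => snd (K t z)) y (snd integrand).

Lemma Re_twice_pos x v : 0 < x -> 0 < Re (Cadd (x, v) (Cconj (x, v))).
Proof. intros; unfold Re, Cadd, Cconj; simpl; lra. Qed.

(* The integrand is  i P0(x, v - 2 k(y)). *)
Lemma K_der x v t : 0 < x ->
  derivable_pt_lim (fun t => fst (K t (x, v))) t 0 /\
  derivable_pt_lim (fun t => snd (K t (x, v))) t (P0 x (v - 2 * k t)).
Proof.
  intros Hx. destruct (HK (x, v) (Re_twice_pos x v Hx) t) as [A B]. cbv zeta in A, B.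
  assert (E1 : Cadd (Cconj (x, v)) (Cmul (RtoC 2) (Cmul Ci (RtoC (k t)))) = (x, - (v - 2 * k t))).
  { unfold Cadd, Cconj, Cmul, RtoC, Ci; simpl; f_equal; ring. }
  assert (E2 : Csub (x, v) (Cmul (RtoC 2) (Cmul Ci (RtoC (k t)))) = (x, v - 2 * k t)).
  { unfold Csub, Cadd, Copp, Cmul, RtoC, Ci; simpl; f_equal; ring. }
  rewrite E1, E2, Cln_conj_ratio in A, B by auto. simpl in A, B. split; auto.
Qed.

Lemma K_re x v t : 0 < x -> fst (K t (x, v)) = 0.
Proof.
  intros Hx. rewrite (zero_derivative_const (fun t => fst (K t (x, v))) y0 t).
  - rewrite HK0 by (apply Re_twice_pos; auto). reflexivity.
  - intros c _. apply (K_der x v c Hx).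
Qed.

Definition rho3 (y : R) (z : Cx) := r y - 2 * snd (K y z).
Definition rho3y (y : R) (z : Cx) := r1 y - 2 * P0 (fst z) (snd z - 2 * k y).
Definition rho3yy (y : R) (z : Cx) :=
  r2 y - 2 * (Pu (fst z) (snd z - 2 * k y) * (0 - (0 * k y + 2 * k1 y))).
Definition rho3yx (y : R) (z : Cx) := -2 * Px (fst z) (snd z - 2 * k y).
Definition rho3yv (y : R) (z : Cx) := -2 * Pu (fst z) (snd z - 2 * k y).
(* z-derivatives of Im K: primitives of the corresponding kernel derivatives *)
Definition Kprim (A : R -> R -> R) (y : R) (z : Cx) :=
  PrimF y0 (fun t => A (fst z) (snd z - 2 * k t)) y y.
Definition rho3x y z := -2 * Kprim Px y z.
Definition rho3v y z := -2 * Kprim Pu y z.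
Definition rho3xx y z := -2 * Kprim Pxx y z.
Definition rho3xv y z := -2 * Kprim Pxu y z.
Definition rho3vv y z := -2 * Kprim Puu y z.

Lemma line_der_re (h : Cx -> R) x v l :
  derivable_pt_lim (fun s => h (s, v)) x l -> derivable_pt_lim (fun t => h (Cadd (x, v) (t, 0))) 0 l.
Proof.
  intros H. apply (derivable_pt_lim_ext (fun t => h (x + t, v))).
  - intros t. unfold Cadd; simpl. rewrite Rplus_0_r; auto.
  - apply (dpl_shift0 (fun s => h (s, v))); auto.
Qed.
Lemma line_der_im (h : Cx -> R) x v l :
  derivable_pt_lim (fun s => h (x, s)) v l -> derivable_pt_lim (fun t => h (Cadd (x, v) (0, t))) 0 l.
Proof.
  intros H. apply (derivable_pt_lim_ext (fun t => h (x, v + t))).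
  - intros t. unfold Cadd; simpl. rewrite Rplus_0_r; auto.
  - apply (dpl_shift0 (fun s => h (x, s))); auto.
Qed.

Lemma dpl_times_m2 (h : R -> R) x l : derivable_pt_lim h x l ->
  derivable_pt_lim (fun s => -2 * h s) x (-2 * l).
Proof. intros H. eapply dpl_eq; [apply dpl_mult; [apply dpl_const | exact H] | cbv beta; ring]. Qed.
Lemma dpl_minus_2times (h : R -> R) c x l : derivable_pt_lim h x l ->
  derivable_pt_lim (fun s => c - 2 * h s) x (-2 * l).
Proof.
  intros H. eapply dpl_eq.
  - apply dpl_minus; [apply dpl_const|]. apply dpl_mult; [apply dpl_const | exact H].
  - cbv beta. ring.
Qed.

Lemma rho3_dy y z : 0 < fst z -> derivable_pt_lim (fun t => rho3 t z) y (rho3y y z).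
Proof.
  destruct z as [x v]; simpl; intros Hx. unfold rho3, rho3y; simpl. eapply dpl_eq.
  - apply dpl_minus; [apply Hr1|]. apply dpl_mult; [apply dpl_const | apply (K_der x v y Hx)].
  - cbv beta. ring.
Qed.

Lemma rho3_dyy y z : 0 < fst z -> derivable_pt_lim (fun t => rho3y t z) y (rho3yy y z).
Proof.
  destruct z as [x v]; simpl; intros Hx. unfold rho3y, rho3yy; simpl. eapply dpl_eq.
  - apply dpl_minus; [apply Hr2|]. apply dpl_mult; [apply dpl_const|].
    apply (dpl_comp (fun t => v - 2 * k t) (fun u => P0 x u)); [|apply P0_du; auto].
    apply dpl_minus; [apply dpl_const|]. apply dpl_mult; [apply dpl_const | apply Hkd].
  - cbv beta. ring.
Qed.

Lemma rho3_dx y z : 0 < fst z -> derivable_pt_lim (fun t => rho3 y (Cadd z (t,0))) 0 (rho3x y z).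
Proof.
  destruct z as [x v]; simpl; intros Hx. unfold rho3x, Kprim; simpl.
  apply (line_der_re (fun z => rho3 y z)). unfold rho3. simpl. apply dpl_minus_2times.
  apply (derive_primitive_x k k1 y0 Hkd P0 Px Pxx (fun t s => snd (K t (s, v))) y x v
           (2 / (x / 2 * (x / 2)))); auto.
  - intros s u Hs; apply P0_dx; auto.
  - intros s u Hs; apply Px_dx; auto.
  - intros s u Hs; apply Pxx_bound; lra.
  - intros w; exists (Pxu x w); apply Px_du; auto.
  - intros s Hs t _. apply Rabs_def2 in Hs. apply K_der; lra.
  - intros s Hs. apply Rabs_def2 in Hs. rewrite HK0 by (apply Re_twice_pos; lra). auto.
Qed.

Lemma rho3_dv y z : 0 < fst z -> derivable_pt_lim (fun t => rho3 y (Cadd z (0,t))) 0 (rho3v y z).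
Proof.
  destruct z as [x v]; simpl; intros Hx. unfold rho3v, Kprim; simpl.
  apply (line_der_im (fun z => rho3 y z)). unfold rho3. simpl. apply dpl_minus_2times.
  apply (derive_primitive_v k k1 y0 Hkd P0 Pu Puu (fun t s => snd (K t (x, s))) y x v
           (2 / (x * x))); auto.
  - intros u; apply P0_du; auto.
  - intros u; apply Pu_du; auto.
  - intros u; apply Puu_bound; lra.
  - intros s Hs t _. apply K_der; lra.
  - intros s Hs. rewrite HK0 by (apply Re_twice_pos; lra). auto.
Qed.

Lemma rho3_y_dx y z : 0 < fst z ->
  derivable_pt_lim (fun t => rho3y y (Cadd z (t,0))) 0 (rho3yx y z).
Proof.
  destruct z as [x v]; simpl; intros Hx. unfold rho3yx; simpl.
  apply (line_der_re (fun z => rho3y y z)). unfold rho3y. simpl. apply dpl_minus_2times.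
  apply (P0_dx x (v - 2 * k y)); auto.
Qed.

Lemma rho3_y_dv y z : 0 < fst z ->
  derivable_pt_lim (fun t => rho3y y (Cadd z (0,t))) 0 (rho3yv y z).
Proof.
  destruct z as [x v]; simpl; intros Hx. unfold rho3yv; simpl.
  apply (line_der_im (fun z => rho3y y z)). unfold rho3y. simpl. apply dpl_minus_2times.
  apply (dpl_shift (fun u => P0 x u) (fun u => Pu x u) (2 * k y) v). apply P0_du; auto.
Qed.

Lemma Kprim_spec (A A1 : R -> R -> R) x v Y :
  (forall w, derivable_pt_lim (fun u => A x u) w (A1 x w)) ->
  PrimF y0 (fun t => A x (v - 2 * k t)) Y y0 = 0 /\
  forall t, Rmin y0 Y <= t <= Rmax y0 Y ->
    derivable_pt_lim (PrimF y0 (fun t => A x (v - 2 * k t)) Y) t (A x (v - 2 * k t)).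
Proof.
  intros H. apply (shifted_primitive_spec k k1 y0 Hkd (fun u => A x u)).
  intros w; exists (A1 x w); auto.
Qed.

Lemma rho3_x_dx y z : 0 < fst z ->
  derivable_pt_lim (fun t => rho3x y (Cadd z (t,0))) 0 (rho3xx y z).
Proof.
  destruct z as [x v]; simpl; intros Hx. unfold rho3xx, Kprim; simpl.
  apply (line_der_re (fun z => rho3x y z)). unfold rho3x, Kprim. simpl. apply dpl_times_m2.
  apply (derive_primitive_x k k1 y0 Hkd Px Pxx Pxxx
           (fun t s => PrimF y0 (fun t => Px s (v - 2 * k t)) y t) y x v
           (12 / (x / 2 * (x / 2) * (x / 2)))); auto.
  - intros s u Hs; apply Px_dx; auto.
  - intros s u Hs; apply Pxx_dx; auto.
  - intros s u Hs; apply Pxxx_bound; lra.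
  - intros w; exists (Pxxu x w); apply Pxx_du; auto.
  - intros s Hs t Ht. apply Rabs_def2 in Hs. apply (Kprim_spec Px Pxu s v y); auto.
    intros w; apply Px_du; lra.
  - intros s Hs. apply Rabs_def2 in Hs. apply (Kprim_spec Px Pxu s v y).
    intros w; apply Px_du; lra.
Qed.

Lemma rho3_x_dv y z : 0 < fst z ->
  derivable_pt_lim (fun t => rho3x y (Cadd z (0,t))) 0 (rho3xv y z).
Proof.
  destruct z as [x v]; simpl; intros Hx. unfold rho3xv, Kprim; simpl.
  apply (line_der_im (fun z => rho3x y z)). unfold rho3x, Kprim. simpl. apply dpl_times_m2.
  apply (derive_primitive_v k k1 y0 Hkd Px Pxu Pxuu
           (fun t s => PrimF y0 (fun t => Px x (s - 2 * k t)) y t) y x v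
           (12 / (x * x * x))); auto.
  - intros u; apply Px_du; auto.
  - intros u; apply Pxu_du; auto.
  - intros u; apply Pxuu_bound; lra.
  - intros s Hs t Ht. apply (Kprim_spec Px Pxu x s y); auto. intros w; apply Px_du; lra.
  - intros s Hs. apply (Kprim_spec Px Pxu x s y). intros w; apply Px_du; lra.
Qed.

Lemma rho3_v_dx y z : 0 < fst z ->
  derivable_pt_lim (fun t => rho3v y (Cadd z (t,0))) 0 (rho3xv y z).
Proof.
  destruct z as [x v]; simpl; intros Hx. unfold rho3xv, Kprim; simpl.
  apply (line_der_re (fun z => rho3v y z)). unfold rho3v, Kprim. simpl. apply dpl_times_m2.
  apply (derive_primitive_x k k1 y0 Hkd Pu Pxu Pxxu
           (fun t s => PrimF y0 (fun t => Pu s (v - 2 * k t)) y t) y x v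
           (12 / (x / 2 * (x / 2) * (x / 2)))); auto.
  - intros s u Hs; apply Pu_dx; auto.
  - intros s u Hs; apply Pxu_dx; auto.
  - intros s u Hs; apply Pxxu_bound; lra.
  - intros w; exists (Pxuu x w); apply Pxu_du; auto.
  - intros s Hs t Ht. apply Rabs_def2 in Hs. apply (Kprim_spec Pu Puu s v y); auto.
    intros w; apply Pu_du; lra.
  - intros s Hs. apply Rabs_def2 in Hs. apply (Kprim_spec Pu Puu s v y).
    intros w; apply Pu_du; lra.
Qed.

Lemma rho3_v_dv y z : 0 < fst z ->
  derivable_pt_lim (fun t => rho3v y (Cadd z (0,t))) 0 (rho3vv y z).
Proof.
  destruct z as [x v]; simpl; intros Hx. unfold rho3vv, Kprim; simpl.
  apply (line_der_im (fun z => rho3v y z)). unfold rho3v, Kprim. simpl. apply dpl_times_m2.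
  apply (derive_primitive_v k k1 y0 Hkd Pu Puu Puuu
           (fun t s => PrimF y0 (fun t => Pu x (s - 2 * k t)) y t) y x v
           (12 / (x * x * x))); auto.
  - intros u; apply Pu_du; auto.
  - intros u; apply Puu_du; auto.
  - intros u; apply Puuu_bound; lra.
  - intros s Hs t Ht. apply (Kprim_spec Pu Puu x s y); auto. intros w; apply Pu_du; lra.
  - intros s Hs. apply (Kprim_spec Pu Puu x s y). intros w; apply Pu_du; lra.
Qed.

(* Harmonicity is inherited from the kernel: the primitive of Pxx + Puu = 0
   vanishing at y0 is identically 0. *)
Lemma rho3_harmonic y z : 0 < fst z -> rho3xx y z + rho3vv y z = 0.
Proof.
  destruct z as [x v]; simpl; intros Hx. unfold rho3xx, rho3vv, Kprim; simpl.
  destruct (Kprim_spec Pxx Pxxu x v y) as [A0 A1]. { intros w; apply Pxx_du; auto. }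
  destruct (Kprim_spec Puu Puuu x v y) as [B0 B1]. { intros w; apply Puu_du; auto. }
  set (F := fun t => PrimF y0 (fun t => Pxx x (v - 2 * k t)) y t
                   + PrimF y0 (fun t => Puu x (v - 2 * k t)) y t).
  assert (Z : F y = F y0).
  { apply zero_derivative_const. intros c Hc. unfold F. eapply dpl_eq.
    - apply dpl_plus; [apply A1 | apply B1]; auto.
    - apply P_harmonic; auto. }
  unfold F in Z. rewrite A0, B0 in Z. lra.
Qed.

Lemma rho3_y_eikonal y z : 0 < fst z ->
  rho3yv y z * rho3yv y z + rho3yx y z * rho3yx y z = 4 * rho3yv y z / fst z.
Proof.
  destruct z as [x v]; simpl; intros Hx. unfold rho3yv, rho3yx, Pu, Px, DD; simpl.
  field. split; [|lra]. apply Rgt_not_eq.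
  pose proof (Rle_0_sqr (v - 2 * k y)); pose proof (Rmult_lt_0_compat x x Hx Hx).
  unfold Rsqr in *; lra.
Qed.

Lemma add_imaginary B a w : fst w = 0 ->
  Cadd (Cadd B (RtoC a)) (Cmul (Cmul (RtoC 2) Ci) w) = Cadd B (RtoC (a - 2 * snd w)).
Proof. destruct B, w; simpl; intros ->; unfold Cadd, Cmul, RtoC, Ci; simpl; f_equal; ring. Qed.

Lemma psi3_solution : IsSolution U (psi3 b L G r K).
Proof.
  apply (rho_perturbation_solves rho3 rho3y rho3yy rho3x rho3v rho3yx rho3yv
           rho3xx rho3xv rho3vv).
  - exact rho3_dy.
  - exact rho3_dyy.
  - exact rho3_dx.
  - exact rho3_dv.
  - exact rho3_y_dx.
  - exact rho3_y_dv.
  - exact rho3_x_dx.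
  - exact rho3_x_dv.
  - exact rho3_v_dx.
  - exact rho3_v_dv.
  - exact rho3_harmonic.
  - exact rho3_y_eikonal.
  - intros q [x v] Hx. simpl in Hx. unfold psi3, psi1.
    rewrite add_imaginary by (apply K_re; auto). reflexivity.
Qed.

End Instances.

(* psi2 is the case k = 0 of psi3, with K(y, z) = y ln(conj z / z). *)
Lemma psi2_solution (r r1 r2 : R -> R) :
  (forall y, derivable_pt_lim r y (r1 y)) -> (forall y, derivable_pt_lim r1 y (r2 y)) ->
  IsSolution U (psi2 b L G r).
Proof.
  intros Hr1 Hr2.
  set (K2 := fun y z => Cmul (RtoC y) (Cln (Cdiv (Cconj z) z))).
  replace (psi2 b L G r) with (psi3 b L G r K2).
  2:{ apply functional_extensionality; intro q; apply functional_extensionality; intro z.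
      unfold psi3, psi2, K2. unfold Cadd, Cmul, RtoC, Ci; simpl. f_equal; ring. }
  apply (psi3_solution r r1 r2 Hr1 Hr2 (fun _ => 0) (fun _ => 0) 0 K2).
  - intros t; apply dpl_const.
  - intros z _. unfold K2, Cmul, RtoC; simpl. f_equal; ring.
  - intros z _ y. cbv zeta.
    replace (Cadd (Cconj z) (Cmul (RtoC 2) (Cmul Ci (RtoC 0)))) with (Cconj z)
      by (unfold Cadd, Cconj, Cmul, RtoC, Ci; simpl; f_equal; ring).
    replace (Csub z (Cmul (RtoC 2) (Cmul Ci (RtoC 0)))) with z
      by (destruct z; unfold Csub, Cadd, Copp, Cmul, RtoC, Ci; simpl; f_equal; ring).
    unfold K2, Cmul, RtoC; cbn [fst snd].
    split; (eapply dpl_eq; [dpl | cbv beta; ring]).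
Qed.

End Solutions.

Lemma Smooth_derivatives f : Smooth f ->
  exists f1 f2, (forall y, derivable_pt_lim f y (f1 y)) /\ (forall y, derivable_pt_lim f1 y (f2 y)).
Proof.
  intros [fs [Hfs0 Hfs]]. exists (fs 1%nat), (fs 2%nat).
  split; intro y; [rewrite <- Hfs0|]; apply Hfs.
Qed.

Theorem mainTheorem2
  (U : Cx -> Cx -> Prop)            (* the open set of (q, z) *)
  (b b' : Cx -> Cx)                  (* holomorphic b, with complex derivative b' *)
  (L : Cx -> Cx -> Cx)                (* the chosen branch of ln (q + b(z)) *)
  (G : Cx -> R) (r k : R -> R) (y0 : R) (K : R -> Cx -> Cx)
  (HU : Open2 U)
  (Hz : forall q z, U q z -> 0 < Re (Cadd z (Cconj z)))
  (Hb : forall q z, U q z -> CDeriv b z (b' z))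
  (Hb' : forall q z, U q z -> exists l, CDeriv b' z l)
  (HLexp : forall q z, U q z -> Cexp (L q z) = Cadd q (b z))
  (HLcont : ContinuousOn2 U L)
  (HG : forall q z, U q z ->
      PartDiff (fun w => RtoC (G w)) z /\
      PartDiff (Wd (fun w => RtoC (G w))) z /\
      Wdb (Wd (fun w => RtoC (G w))) z =
        Cdiv (Cadd (b z) (Cconj (b z)))
             (Cmul (Cadd z (Cconj z)) (Cadd z (Cconj z))))
  (Hr : Smooth r) (Hk : Smooth k)
  (HK0 : forall z, 0 < Re (Cadd z (Cconj z)) -> K y0 z = (0, 0))
  (HK : forall z, 0 < Re (Cadd z (Cconj z)) -> forall y,
      let integrand :=
        Cln (Cdiv (Cadd (Cconj z) (Cmul (RtoC 2) (Cmul Ci (RtoC (k y)))))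
                  (Csub z (Cmul (RtoC 2) (Cmul Ci (RtoC (k y)))))) in
      derivable_pt_lim (fun t => fst (K t z)) y (fst integrand) /\
      derivable_pt_lim (fun t => snd (K t z)) y (snd integrand)) :
  let psi1 := fun q z =>
    (((q + b z) * L q z) + ((Cconj q + Cconj (b z)) * Cconj (L q z))
     - ((q + Cconj q) * (Cln (z + Cconj z) + RtoC 1))
     + RtoC (G z) + RtoC (r (yof q)))%C in
  let psi2 := fun q z =>
    (psi1 q z + RtoC 2 * Ci * RtoC (yof q) * Cln (Cconj z / z))%C in
  let psi3 := fun q z =>
    (psi1 q z + RtoC 2 * Ci * K (yof q) z)%C in
  IsSolution U psi1 /\ IsSolution U psi2 /\ IsSolution U psi3.
Proof.
  intros psi1' psi2' psi3'.
  destruct (Smooth_derivatives r Hr) as [r1 [r2 [Hr1 Hr2]]].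
  destruct (Smooth_derivatives k Hk) as [k1 [_ [Hk1 _]]].
  split; [|split].
  - exact (psi1_solution U b b' L G HU Hz Hb Hb' HLexp HLcont HG r r1 r2 Hr1 Hr2).
  - exact (psi2_solution U b b' L G HU Hz Hb Hb' HLexp HLcont HG r r1 r2 Hr1 Hr2).
  - exact (psi3_solution U b b' L G HU Hz Hb Hb' HLexp HLcont HG r r1 r2 Hr1 Hr2
             k k1 y0 K Hk1 HK0 HK).
Qed.
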